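(* Let $V$ be a simple isometric linear transformation with deficiency indices $(1,1)$ in a Hilbert space, with characteristic function $w_V$. A point $z\in\mathbb{T}$ is not an eigenvalue of any unitary extension $U$ of $V$ if and only if $w_V$ does not have an angular derivative (in the sense of Carathéodory) at $z$. Moreover, the symmetric linear transformation $B=\mu^{-1}(V)$ is densely defined if and only if $w_V$ does not have an angular derivative at $z=1$.
   Context: $\mathbb{D}$ is the open unit disc, $\mathbb{T}$ the unit circle, $\mu^{-1}(V)=i(1+V)(1-V)^{-1}$ with domain $\mathrm{ran}(V-1)$ (the inverse Cayley transform). An isometric linear transformation $V$ is a linear isometry from a closed subspace $\mathrm{dom}(V)$ into the Hilbert space; deficiency indices $(\dim\mathrm{dom}(V)^\perp,\dim\mathrm{ran}(V)^\perp)$; simple = no unitary restriction to a non-trivial subspace. Its characteristic function (defined up to a unimodular constant) is $w_V(z)=\frac{z\langle (U-z)^{-1}\psi_+,\psi_+\rangle}{\langle (U-z)^{-1}U\psi_+,\psi_+\rangle}$, $z\in\mathbb{D}$, with $U$ any unitary extension of $V$ in the same Hilbert space and $0\ne\psi_+\in\mathrm{dom}(V)^\perp$; it lies in the closed unit ball of $H^\infty(\mathbb{D})$. A function $b$ in the closed unit ball of $H^\infty(\mathbb{D})$ has an angular derivative in the sense of Carathéodory at $\gamma\in\mathbb{T}$ if the non-tangential limits of $b$ and $b'$ at $\gamma$ exist and the non-tangential limit of $b$ at $\gamma$ has modulus one. *)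

From Stdlib Require Import Reals.
From Coquelicot Require Import Complex.

Local Open Scope R_scope.

Notation CC := Complex.C.

(* Complex Hilbert spaces (inner product linear in the first argument) *)

Record HilbertSpace (H : Type) := {
  hzero : H;
  hadd  : H -> H -> H;
  hopp  : H -> H;
  hscal : CC -> H -> H;
  hinner : H -> H -> CC;
  hadd_assoc : forall x y z, hadd x (hadd y z) = hadd (hadd x y) z;
  hadd_comm  : forall x y, hadd x y = hadd y x;
  hadd_zero  : forall x, hadd x hzero = x;
  hadd_opp   : forall x, hadd x (hopp x) = hzero;
  hscal_one  : forall x, hscal (RtoC 1) x = x;
  hscal_assoc : forall a b x, hscal a (hscal b x) = hscal (Cmult a b) x;
  hscal_distr_l : forall a x y, hscal a (hadd x y) = hadd (hscal a x) (hscal a y);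
  hscal_distr_r : forall a b x, hscal (Cplus a b) x = hadd (hscal a x) (hscal b x);
  hinner_conj : forall x y, hinner x y = Cconj (hinner y x);
  hinner_add_l : forall x y z, hinner (hadd x y) z = Cplus (hinner x z) (hinner y z);
  hinner_scal_l : forall a x y, hinner (hscal a x) y = Cmult a (hinner x y);
  hinner_pos : forall x, 0 <= Re (hinner x x);
  hinner_def : forall x, hinner x x = RtoC 0 -> x = hzero;
  hcomplete : forall u : nat -> H,
    (forall eps, 0 < eps -> exists N, forall m n, (N <= m)%nat -> (N <= n)%nat ->
        sqrt (Re (hinner (hadd (u m) (hopp (u n))) (hadd (u m) (hopp (u n))))) < eps) ->
    exists l, forall eps, 0 < eps -> exists N, forall n, (N <= n)%nat ->
        sqrt (Re (hinner (hadd (u n) (hopp l)) (hadd (u n) (hopp l)))) < eps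
}.

Arguments hzero {H} _.
Arguments hadd {H} _ _ _.
Arguments hopp {H} _ _.
Arguments hscal {H} _ _ _.
Arguments hinner {H} _ _ _.

Section HilbertDefs.
Context {H : Type} (HS : HilbertSpace H).

Definition hsub (x y : H) : H := hadd HS x (hopp HS y).
Definition hnorm (x : H) : R := sqrt (Re (hinner HS x x)).

Definition closed_subspace (S : H -> Prop) : Prop :=
  S (hzero HS) /\
  (forall x y, S x -> S y -> S (hadd HS x y)) /\
  (forall a x, S x -> S (hscal HS a x)) /\
  (forall u : nat -> H, forall l, (forall n, S (u n)) ->
     (forall eps, 0 < eps -> exists N, forall n, (N <= n)%nat -> hnorm (hsub (u n) l) < eps) ->
     S l).

Definition orth (S : H -> Prop) : H -> Prop :=
  fun y => forall x, S x -> hinner HS x y = RtoC 0.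

Definition dim_one (S : H -> Prop) : Prop :=
  exists e, e <> hzero HS /\ forall y, S y <-> exists c, y = hscal HS c e.

Definition dense (S : H -> Prop) : Prop :=
  forall h eps, 0 < eps -> exists y, S y /\ hnorm (hsub h y) < eps.

(* An isometric linear transformation: a linear isometry V defined on the
   closed subspace dom (values of V outside dom are irrelevant). *)
Definition isometric_lt (dom : H -> Prop) (V : H -> H) : Prop :=
  closed_subspace dom /\
  (forall x y, dom x -> dom y -> V (hadd HS x y) = hadd HS (V x) (V y)) /\
  (forall a x, dom x -> V (hscal HS a x) = hscal HS a (V x)) /\
  (forall x, dom x -> hnorm (V x) = hnorm x).

Definition ran (dom : H -> Prop) (V : H -> H) : H -> Prop :=
  fun y => exists x, dom x /\ y = V x.

(* deficiency indices (dim dom(V)^perp, dim ran(V)^perp) = (1,1) *)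
Definition deficiency_1_1 (dom : H -> Prop) (V : H -> H) : Prop :=
  dim_one (orth dom) /\ dim_one (orth (ran dom V)).

(* simple: no unitary restriction to a non-trivial (closed) subspace,
   i.e. no closed subspace L <> {0}, L included in dom, with V(L) = L. *)
Definition simple_isometry (dom : H -> Prop) (V : H -> H) : Prop :=
  ~ exists L : H -> Prop,
      closed_subspace L /\ (exists x, L x /\ x <> hzero HS) /\
      (forall x, L x -> dom x) /\
      (forall x, L x -> L (V x)) /\
      (forall y, L y -> exists x, L x /\ y = V x).

Definition unitary (U : H -> H) : Prop :=
  (forall x y, U (hadd HS x y) = hadd HS (U x) (U y)) /\
  (forall a x, U (hscal HS a x) = hscal HS a (U x)) /\
  (forall x, hnorm (U x) = hnorm x) /\
  (forall y, exists x, U x = y).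

(* unitary extension of V in the same Hilbert space *)
Definition unitary_extension (dom : H -> Prop) (V U : H -> H) : Prop :=
  unitary U /\ forall x, dom x -> U x = V x.

Definition eigenvalue (U : H -> H) (z : CC) : Prop :=
  exists x, x <> hzero HS /\ U x = hscal HS z x.

(* w is a characteristic function of V:
   w z = z <(U-z)^{-1} psi, psi> / <(U-z)^{-1} U psi, psi>  for z in the disc,
   for some unitary extension U and some nonzero psi in dom(V)^perp.
   (U - z)^{-1} psi is described as the (unique) x with U x - z x = psi. *)
Definition characteristic_function (dom : H -> Prop) (V : H -> H) (w : CC -> CC) : Prop :=
  exists U psi,
    unitary_extension dom V U /\ psi <> hzero HS /\ orth dom psi /\
    forall z, Cmod z < 1 ->
      forall x y, hsub (U x) (hscal HS z x) = psi ->
                  hsub (U y) (hscal HS z y) = U psi ->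
      w z = Cdiv (Cmult z (hinner HS x psi)) (hinner HS y psi).

End HilbertDefs.

(* non-tangential limit of f at gamma (|gamma| = 1): limit L along every
   Stolz angle { z in D : |z - gamma| < M (1 - |z|) }, M > 1. *)
Definition nt_limit (f : CC -> CC) (gamma L : CC) : Prop :=
  forall M, 1 < M -> forall eps, 0 < eps -> exists delta, 0 < delta /\
    forall z, Cmod z < 1 -> Cmod (Cminus z gamma) < M * (1 - Cmod z) ->
      Cmod (Cminus z gamma) < delta -> Cmod (Cminus (f z) L) < eps.

Definition disc_derivative (f : CC -> CC) (z d : CC) : Prop :=
  forall eps, 0 < eps -> exists delta, 0 < delta /\
    forall w, Cmod w < 1 -> w <> z -> Cmod (Cminus w z) < delta ->
      Cmod (Cminus (Cdiv (Cminus (f w) (f z)) (Cminus w z)) d) < eps.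

Definition has_angular_derivative (b : CC -> CC) (gamma : CC) : Prop :=
  (exists L, nt_limit b gamma L /\ Cmod L = 1) /\
  (exists b' : CC -> CC,
     (forall z, Cmod z < 1 -> disc_derivative b z (b' z)) /\
     exists L', nt_limit b' gamma L').

From Stdlib Require Import Reals Lra Psatz ClassicalEpsilon Classical.
From Coquelicot Require Import Complex.

(* Fix a unitary extension [U] of [V] and a unit vector [psi] spanning [dom(V)^perp].
   Then [w = 1 - 1/A] with [A(z) = <(U - z)^-1 U psi, psi>], and [Re A > 1/2] on the
   disc.  The unitary extensions of [V] are the maps [U_al] sending [psi] to [al U psi]
   ([|al| = 1]), and their characteristic functions are [conj al w].
   At [z0] on the circle write [psi = p + q] with [p] in the closure of [ran (U - z0)]
   and [U q = z0 q].  The term [q / (1 - z conj z0)] dominates the resolvent: inside a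
   Stolz angle [A(z) (1 - z conj z0) -> |q|^2], so [w -> 1] and
   [w' -> conj z0 / |q|^2] as soon as [q <> 0]; by simplicity every eigenvector of an
   extension has a nonzero [psi]-component, so an eigenvalue [z0] gives [q <> 0].
   Conversely, if [q = 0] then [(1 - |z|) |(U - z)^-1 U psi| -> 0], whereas a bounded
   derivative along the radius gives [|1 / A(t z0)| <= C (1 - t)].
   Finally [ran (V - 1)] is dense iff no extension fixes a vector, because a vector
   orthogonal to [ran (V - 1)] is fixed by a suitable [U_al]. *)

Local Open Scope R_scope.

(** * Complex numbers and functions on the disc *)

Lemma C_eq (a b : C) : Re a = Re b -> Im a = Im b -> a = b.
Proof. destruct a, b; simpl; intros; subst; auto. Qed.

Lemma Cmod_RtoC r : 0 <= r -> Cmod (RtoC r) = r.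
Proof. intro. rewrite Cmod_R. apply Rabs_pos_eq; auto. Qed.

Lemma Cmod_neq_0 c : 0 < Cmod c -> c <> RtoC 0.
Proof. apply Cmod_gt_0. Qed.

Lemma Re_le_Cmod c : Re c <= Cmod c.
Proof. pose proof (re_le_Cmod c). pose proof (Rle_abs (Re c)). lra. Qed.

Lemma Im_le_Cmod c : Rabs (Im c) <= Cmod c.
Proof.
  destruct c as [a b]. unfold Cmod; simpl.
  rewrite <- sqrt_Rsqr_abs. apply sqrt_le_1_alt. unfold Rsqr. nra.
Qed.

Lemma Cmod_le_Re_Im c : Cmod c <= Rabs (Re c) + Rabs (Im c).
Proof.
  destruct c as [a b]. unfold Cmod; simpl.
  rewrite <- (sqrt_Rsqr (Rabs a + Rabs b)) by (pose proof (Rabs_pos a); pose proof (Rabs_pos b); lra).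
  apply sqrt_le_1_alt. unfold Rsqr.
  pose proof (Rabs_pos a); pose proof (Rabs_pos b).
  assert (Rabs a * Rabs a = a * a) by (rewrite <- Rabs_mult; apply Rabs_pos_eq; nra).
  assert (Rabs b * Rabs b = b * b) by (rewrite <- Rabs_mult; apply Rabs_pos_eq; nra).
  nra.
Qed.

Lemma Cmod_minus_sym a b : Cmod (Cminus a b) = Cmod (Cminus b a).
Proof. rewrite <- Cmod_opp. f_equal. ring. Qed.

Lemma Cmod_triangle_rev a b : Cmod a - Cmod b <= Cmod (Cminus a b).
Proof.
  pose proof (Cmod_triangle (Cminus a b) b) as T.
  replace (Cplus (Cminus a b) b) with a in T by ring. lra.
Qed.

Lemma Cmod_triangle_minus a b c : Cmod (Cminus a c) <= Cmod (Cminus a b) + Cmod (Cminus b c).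
Proof.
  pose proof (Cmod_triangle (Cminus a b) (Cminus b c)) as T.
  replace (Cplus (Cminus a b) (Cminus b c)) with (Cminus a c) in T by ring. lra.
Qed.

Lemma Cmod_minus_le a b : Cmod (Cminus a b) <= Cmod a + Cmod b.
Proof. unfold Cminus. rewrite <- (Cmod_opp b). apply Cmod_triangle. Qed.

Lemma Cmult_conj_unit_l z : Cmod z = 1 -> Cmult (Cconj z) z = RtoC 1.
Proof.
  intro E. rewrite Cmult_comm, <- Cmod2_conj, E. apply injective_projections; simpl; ring.
Qed.

Lemma Cmult_conj_unit_r z : Cmod z = 1 -> Cmult z (Cconj z) = RtoC 1.
Proof. intro E. rewrite Cmult_comm. apply Cmult_conj_unit_l, E. Qed.

Lemma Cconj_unit z : Cmod z = 1 -> Cconj z = Cinv z.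
Proof.
  intro Hz. assert (nz : z <> RtoC 0) by (apply Cmod_neq_0; lra).
  transitivity (Cmult (Cinv z) (Cmult z (Cconj z))). field. auto.
  rewrite Cmult_conj_unit_r by auto. ring.
Qed.

Lemma Cmod_one_minus_conj_unit z z0 : Cmod z0 = 1 ->
  Cmod (Cminus (RtoC 1) (Cmult z (Cconj z0))) = Cmod (Cminus z z0).
Proof.
  intro E.
  replace (Cminus (RtoC 1) (Cmult z (Cconj z0))) with (Cmult (Cconj z0) (Cminus z0 z))
    by (rewrite <- (Cmult_conj_unit_l z0 E); ring).
  rewrite Cmod_mult, Cmod_conj, E, Rmult_1_l, Cmod_minus_sym. auto.
Qed.

Lemma dist_unit_ge z z0 : Cmod z0 = 1 -> 1 - Cmod z <= Cmod (Cminus z z0).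
Proof.
  intro E. rewrite Cmod_minus_sym. pose proof (Cmod_triangle_rev z0 z). lra.
Qed.

Lemma one_minus_conj_unit_neq_0 z z0 : Cmod z0 = 1 -> Cmod z < 1 ->
  Cminus (RtoC 1) (Cmult z (Cconj z0)) <> RtoC 0.
Proof.
  intros E Hz. apply Cmod_neq_0. rewrite Cmod_one_minus_conj_unit by auto.
  pose proof (dist_unit_ge z z0 E). lra.
Qed.

Lemma Cmod_radial t z0 : Cmod z0 = 1 -> Cmod (Cmult (RtoC t) z0) = Rabs t.
Proof. intro E. rewrite Cmod_mult, E, Cmod_R. ring. Qed.

Lemma nt_limit_ext f g gam L : (forall z, Cmod z < 1 -> f z = g z) ->
  nt_limit f gam L -> nt_limit g gam L.
Proof.
  intros E Hf M HM eps ep. destruct (Hf M HM eps ep) as [d [dp Hd]].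
  exists d. split; auto. intros z Hz Hst Hd'. rewrite <- E by auto. auto.
Qed.

Lemma nt_limit_scal f c gam L : Cmod c = 1 ->
  nt_limit f gam L -> nt_limit (fun z => Cmult c (f z)) gam (Cmult c L).
Proof.
  intros Hc Hf M HM eps ep. destruct (Hf M HM eps ep) as [d [dp Hd]].
  exists d. split; auto. intros z Hz Hst Hd'.
  replace (Cminus (Cmult c (f z)) (Cmult c L)) with (Cmult c (Cminus (f z) L)) by ring.
  rewrite Cmod_mult, Hc, Rmult_1_l. auto.
Qed.

Lemma disc_derivative_ext f g z d : Cmod z < 1 -> (forall z, Cmod z < 1 -> f z = g z) ->
  disc_derivative f z d -> disc_derivative g z d.
Proof.
  intros Hz E Hf eps ep. destruct (Hf eps ep) as [del [dp Hd]].
  exists del. split; auto. intros w Hw Hne Hl. rewrite <- !E by auto. auto.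
Qed.

Lemma disc_derivative_scal f c z d : Cmod c = 1 ->
  disc_derivative f z d -> disc_derivative (fun z => Cmult c (f z)) z (Cmult c d).
Proof.
  intros Hc Hf eps ep. destruct (Hf eps ep) as [del [dp Hd]].
  exists del. split; auto. intros w Hw Hne Hl.
  assert (wz : Cminus w z <> RtoC 0) by (intro E; apply Hne, Ceq_minus, E).
  replace (Cminus (Cdiv (Cminus (Cmult c (f w)) (Cmult c (f z))) (Cminus w z)) (Cmult c d))
    with (Cmult c (Cminus (Cdiv (Cminus (f w) (f z)) (Cminus w z)) d)) by (field; auto).
  rewrite Cmod_mult, Hc, Rmult_1_l. auto.
Qed.

Lemma angular_derivative_ext f g gam : (forall z, Cmod z < 1 -> f z = g z) ->
  has_angular_derivative f gam -> has_angular_derivative g gam.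
Proof.
  intros E [[L [HL HLm]] [b' [Hb' [L' HL']]]]. split.
  - exists L. split; auto. apply (nt_limit_ext f); auto.
  - exists b'. split; [|exists L'; auto]. intros z Hz. apply (disc_derivative_ext f); auto.
Qed.

Lemma angular_derivative_scal f c gam : Cmod c = 1 ->
  has_angular_derivative f gam -> has_angular_derivative (fun z => Cmult c (f z)) gam.
Proof.
  intros Hc [[L [HL HLm]] [b' [Hb' [L' HL']]]]. split.
  - exists (Cmult c L). split. apply nt_limit_scal; auto. rewrite Cmod_mult, Hc, HLm. ring.
  - exists (fun z => Cmult c (b' z)). split. intros z Hz. apply disc_derivative_scal; auto.
    exists (Cmult c L'). apply nt_limit_scal; auto.
Qed.

Lemma inv_difference_quotient (a b h Ad : C) : a <> RtoC 0 -> b <> RtoC 0 -> h <> RtoC 0 ->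
  Cminus (Cdiv (Cminus (Cminus (RtoC 1) (Cinv b)) (Cminus (RtoC 1) (Cinv a))) h)
         (Cdiv Ad (Cmult a a)) =
  Cdiv (Cminus (Cmult (Cminus (Cminus b a) (Cmult h Ad)) a) (Cmult (Cmult h Ad) (Cminus b a)))
       (Cmult h (Cmult (Cmult a a) b)).
Proof. intros. field. auto. Qed.

Lemma second_order_numerator_bound (a b h Ad : C) K rho : 0 <= K -> Cmod h < rho ->
  Cmod (Cminus (Cminus b a) (Cmult h Ad)) <= K * Cmod h ^ 2 ->
  Cmod (Cminus (Cmult (Cminus (Cminus b a) (Cmult h Ad)) a) (Cmult (Cmult h Ad) (Cminus b a)))
  <= Cmod h ^ 2 * (K * Cmod a + Cmod Ad * (Cmod Ad + K * rho)).
Proof.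
  intros Kp Hh HE. set (E := Cminus (Cminus b a) (Cmult h Ad)) in *.
  eapply Rle_trans. apply Cmod_minus_le. rewrite !Cmod_mult.
  assert (Cmod (Cminus b a) <= Cmod h * Cmod Ad + K * Cmod h ^ 2).
  { replace (Cminus b a) with (Cplus E (Cmult h Ad)) by (unfold E; ring).
    eapply Rle_trans. apply Cmod_triangle. rewrite Cmod_mult. lra. }
  pose proof (Cmod_ge_0 E). pose proof (Cmod_ge_0 Ad). pose proof (Cmod_ge_0 a).
  pose proof (Cmod_ge_0 h).
  assert (Cmod E * Cmod a <= K * Cmod h ^ 2 * Cmod a) by (apply Rmult_le_compat_r; lra).
  assert (Cmod h * Cmod Ad * Cmod (Cminus b a) <=
          Cmod h * Cmod Ad * (Cmod h * Cmod Ad + K * Cmod h ^ 2)) by (apply Rmult_le_compat_l; nra).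
  assert (Cmod h * Cmod Ad * (K * Cmod h ^ 2) <= Cmod h * Cmod Ad * (K * Cmod h * rho)).
  { apply Rmult_le_compat_l; [nra|]. simpl. rewrite Rmult_1_r, <- Rmult_assoc.
    apply Rmult_le_compat_l; nra. }
  nra.
Qed.

Lemma disc_derivative_one_minus_inv (A : C -> C) z Ad K rho : 0 < rho -> 0 <= K ->
  1/2 <= Cmod (A z) ->
  (forall z', Cmod z' < 1 -> Cmod (Cminus z' z) < rho ->
     1/2 <= Cmod (A z') /\
     Cmod (Cminus (Cminus (A z') (A z)) (Cmult (Cminus z' z) Ad)) <= K * Cmod (Cminus z' z) ^ 2) ->
  disc_derivative (fun z => Cminus (RtoC 1) (Cinv (A z))) z (Cdiv Ad (Cmult (A z) (A z))).
Proof.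
  intros rp Kp Az HA eps ep.
  set (a := A z) in *.
  set (P := K * Cmod a + Cmod Ad * (Cmod Ad + K * rho)).
  pose proof (Cmod_ge_0 a). pose proof (Cmod_ge_0 Ad).
  assert (Pp : 0 <= P) by (unfold P; apply Rplus_le_le_0_compat; apply Rmult_le_pos; nra).
  set (Q := 2 * P / (Cmod a)^2).
  assert (Qp : 0 <= Q) by (unfold Q; apply Rmult_le_pos; [lra|]; left; apply Rinv_0_lt_compat; nra).
  exists (Rmin rho (eps / (Q + 1))). split.
  { apply Rmin_pos; auto. apply Rdiv_lt_0_compat; lra. }
  intros w Hw Hwz Hd.
  assert (Hd1 : Cmod (Cminus w z) < rho) by (eapply Rlt_le_trans; [apply Hd| apply Rmin_l]).
  assert (Hd2 : Cmod (Cminus w z) < eps / (Q + 1)) by (eapply Rlt_le_trans; [apply Hd| apply Rmin_r]).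
  destruct (HA w Hw Hd1) as [Bw HE].
  set (h := Cminus w z) in *.
  assert (hnz : h <> RtoC 0) by (intro Eh; apply Hwz, Ceq_minus, Eh).
  assert (anz : a <> RtoC 0) by (apply Cmod_neq_0; lra).
  assert (bnz : A w <> RtoC 0) by (apply Cmod_neq_0; lra).
  assert (hp : 0 < Cmod h) by (apply Cmod_gt_0; auto).
  rewrite inv_difference_quotient, Cmod_div, !Cmod_mult by (repeat apply Cmult_neq_0; auto).
  pose proof (second_order_numerator_bound a (A w) h Ad K rho Kp Hd1 HE) as Hnum. fold P in Hnum.
  apply Rle_lt_trans with (Cmod h ^ 2 * P / (Cmod h * (Cmod a * Cmod a * (1/2)))).
  { unfold Rdiv. apply Rmult_le_compat; auto. apply Cmod_ge_0.
    left. apply Rinv_0_lt_compat. repeat apply Rmult_lt_0_compat; nra.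
    apply Rinv_le_contravar. repeat apply Rmult_lt_0_compat; nra.
    apply Rmult_le_compat_l. lra. apply Rmult_le_compat_l; nra. }
  replace (Cmod h ^ 2 * P / (Cmod h * (Cmod a * Cmod a * (1 / 2)))) with (Cmod h * Q)
    by (unfold Q; field; lra).
  apply Rle_lt_trans with (Cmod h * (Q + 1)); [nra|].
  apply Rmult_lt_reg_r with (/ (Q + 1)). apply Rinv_0_lt_compat; lra.
  rewrite Rmult_assoc, Rinv_r, Rmult_1_r by lra. auto.
Qed.

(* [P] stands for [Re] or [Im]. *)
Lemma radial_derivative_component (P : C -> R) (f : C -> C) z0 c d :
  (forall a b : C, P (Cminus a b) = P a - P b) ->
  (forall (a : C) (r : R), r <> 0 -> P (Cdiv a (RtoC r)) = P a / r) ->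
  (forall a : C, Rabs (P a) <= Cmod a) ->
  Cmod z0 = 1 -> 0 < c < 1 ->
  disc_derivative f (Cmult (RtoC c) z0) d ->
  derivable_pt_lim (fun t => P (f (Cmult (RtoC t) z0))) c (P (Cmult z0 d)).
Proof.
  intros Pminus Pdiv Pabs Hz0 Hc Hd eps ep.
  destruct (Hd eps ep) as [del [delp Hdel]].
  assert (mp : 0 < Rmin del (Rmin c (1 - c))) by (repeat apply Rmin_pos; lra).
  exists (mkposreal _ mp). intros h hnz hlt. simpl in hlt.
  assert (h1 : Rabs h < del) by (eapply Rlt_le_trans; [apply hlt|apply Rmin_l]).
  assert (h2 : Rabs h < Rmin c (1 - c)) by (eapply Rlt_le_trans; [apply hlt|apply Rmin_r]).
  assert (h3 : Rabs h < c) by (eapply Rlt_le_trans; [apply h2|apply Rmin_l]).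
  assert (h4 : Rabs h < 1 - c) by (eapply Rlt_le_trans; [apply h2|apply Rmin_r]).
  set (w := Cmult (RtoC (c + h)) z0).
  assert (Ew : Cminus w (Cmult (RtoC c) z0) = Cmult (RtoC h) z0)
    by (unfold w; rewrite RtoC_plus; ring).
  assert (Hw : Cmod w < 1).
  { unfold w. rewrite Cmod_radial by auto.
    apply Rabs_def1; apply Rabs_def2 in h3; apply Rabs_def2 in h4; lra. }
  assert (z0nz : z0 <> RtoC 0) by (apply Cmod_neq_0; lra).
  assert (hC : RtoC h <> RtoC 0) by (intro E; apply hnz; injection E; auto).
  assert (Hne : w <> Cmult (RtoC c) z0).
  { intro E. assert (Cmult (RtoC h) z0 = RtoC 0) by (rewrite <- Ew, E; ring).
    apply (Cmult_neq_0 _ _ hC z0nz); auto. }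
  specialize (Hdel w Hw Hne ltac:(rewrite Ew, Cmod_radial; auto)).
  rewrite Ew in Hdel.
  set (D := Cminus (f w) (f (Cmult (RtoC c) z0))) in *.
  replace ((P (f w) - P (f (Cmult (RtoC c) z0))) / h - P (Cmult z0 d))
    with (P (Cminus (Cdiv D (RtoC h)) (Cmult z0 d)))
    by (rewrite Pminus, (Pdiv _ _ hnz); unfold D; rewrite Pminus; auto).
  eapply Rle_lt_trans. apply Pabs.
  replace (Cminus (Cdiv D (RtoC h)) (Cmult z0 d))
    with (Cmult z0 (Cminus (Cdiv D (Cmult (RtoC h) z0)) d)) by (field; auto).
  rewrite Cmod_mult, Hz0, Rmult_1_l. auto.
Qed.

Lemma radial_lipschitz (f fd : C -> C) z0 t s C0 : Cmod z0 = 1 -> 0 < t < s -> s < 1 ->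
  (forall c, t <= c <= s -> disc_derivative f (Cmult (RtoC c) z0) (fd (Cmult (RtoC c) z0))) ->
  (forall c, t <= c <= s -> Cmod (fd (Cmult (RtoC c) z0)) <= C0) ->
  Cmod (Cminus (f (Cmult (RtoC s) z0)) (f (Cmult (RtoC t) z0))) <= 2 * C0 * (s - t).
Proof.
  intros Hz0 Ht Hs Hd Hb.
  assert (Re_minus : forall a b : C, Re (Cminus a b) = Re a - Re b)
    by (intros [] []; simpl; ring).
  assert (Im_minus : forall a b : C, Im (Cminus a b) = Im a - Im b)
    by (intros [] []; simpl; ring).
  assert (Re_div : forall (a : C) r, r <> 0 -> Re (Cdiv a (RtoC r)) = Re a / r)
    by (intros [a1 a2] r Hr; unfold Cdiv, Cinv, Cmult; simpl; field; auto).
  assert (Im_div : forall (a : C) r, r <> 0 -> Im (Cdiv a (RtoC r)) = Im a / r)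
    by (intros [a1 a2] r Hr; unfold Cdiv, Cinv, Cmult; simpl; field; auto).
  destruct (MVT_cor2 (fun x => Re (f (Cmult (RtoC x) z0)))
              (fun x => Re (Cmult z0 (fd (Cmult (RtoC x) z0)))) t s) as [c1 [E1 Hc1]]; [lra| |].
  { intros c Hc. apply (radial_derivative_component Re f z0 c _ Re_minus Re_div re_le_Cmod Hz0);
      [lra|]. apply Hd; lra. }
  destruct (MVT_cor2 (fun x => Im (f (Cmult (RtoC x) z0)))
              (fun x => Im (Cmult z0 (fd (Cmult (RtoC x) z0)))) t s) as [c2 [E2 Hc2]]; [lra| |].
  { intros c Hc. apply (radial_derivative_component Im f z0 c _ Im_minus Im_div Im_le_Cmod Hz0);
      [lra|]. apply Hd; lra. }
  eapply Rle_trans. apply Cmod_le_Re_Im. rewrite Re_minus, Im_minus, E1, E2.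
  rewrite !Rabs_mult, (Rabs_pos_eq (s - t)) by lra.
  assert (Rabs (Re (Cmult z0 (fd (Cmult (RtoC c1) z0)))) <= C0).
  { eapply Rle_trans. apply re_le_Cmod. rewrite Cmod_mult, Hz0, Rmult_1_l. apply Hb. lra. }
  assert (Rabs (Im (Cmult z0 (fd (Cmult (RtoC c2) z0)))) <= C0).
  { eapply Rle_trans. apply Im_le_Cmod. rewrite Cmod_mult, Hz0, Rmult_1_l. apply Hb. lra. }
  nra.
Qed.

Lemma Cmod_perturbed_ge (n : R) e : 0 < n -> Cmod e <= n / 2 -> n / 2 <= Cmod (Cplus (RtoC n) e).
Proof.
  intros np He. pose proof (Cmod_triangle_rev (RtoC n) (Copp e)) as T.
  replace (Cminus (RtoC n) (Copp e)) with (Cplus (RtoC n) e) in T by ring.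
  rewrite Cmod_opp, Cmod_RtoC in T by lra. lra.
Qed.

Lemma perturbed_inv_bound (n : R) (u e : C) : 0 < n -> u <> RtoC 0 -> Cmod e <= n / 2 ->
  Cmod (Cminus (Cminus (RtoC 1) (Cinv (Cdiv (Cplus (RtoC n) e) u))) (RtoC 1)) <= 2 * Cmod u / n.
Proof.
  intros np unz He. pose proof (Cmod_perturbed_ge n e np He) as Hm.
  set (m := Cplus (RtoC n) e) in *.
  assert (mnz : m <> RtoC 0) by (apply Cmod_neq_0; lra).
  replace (Cminus (Cminus (RtoC 1) (Cinv (Cdiv m u))) (RtoC 1)) with (Copp (Cdiv u m))
    by (field; auto).
  rewrite Cmod_opp, Cmod_div by auto.
  apply Rle_trans with (Cmod u / (n / 2)); [|right; field; lra].
  unfold Rdiv. apply Rmult_le_compat_l. apply Cmod_ge_0. apply Rinv_le_contravar; lra.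
Qed.

Lemma perturbed_deriv_bound (n : R) (u e1 e2 z0 : C) delta : 0 < n -> Cmod z0 = 1 ->
  u <> RtoC 0 -> Cmod e1 <= delta -> Cmod e2 <= delta -> delta <= n / 2 ->
  Cmod (Cminus (Cdiv (Cdiv (Cplus (Cmult (Cconj z0) (RtoC n)) e2) (Cmult u u))
                     (Cmult (Cdiv (Cplus (RtoC n) e1) u) (Cdiv (Cplus (RtoC n) e1) u)))
               (Cdiv (Cconj z0) (RtoC n))) <= 16 * delta / (n * n).
Proof.
  intros np Hz0 unz He1 He2 Hd.
  pose proof (Cmod_perturbed_ge n e1 np ltac:(lra)) as Hm.
  set (m := Cplus (RtoC n) e1) in *.
  assert (mnz : m <> RtoC 0) by (apply Cmod_neq_0; lra).
  assert (nC : RtoC n <> RtoC 0) by (intro E; injection E; lra).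
  pose proof (Cmod_ge_0 e1). pose proof (Cmod_ge_0 e2).
  replace (Cminus (Cdiv (Cdiv (Cplus (Cmult (Cconj z0) (RtoC n)) e2) (Cmult u u))
              (Cmult (Cdiv m u) (Cdiv m u))) (Cdiv (Cconj z0) (RtoC n)))
    with (Cdiv (Cminus (Cmult (RtoC n) e2) (Cmult (Cconj z0) (Cplus (Cmult (RtoC (2 * n)) e1) (Cmult e1 e1))))
               (Cmult (RtoC n) (Cmult m m)))
    by (unfold m; rewrite RtoC_mult; field; repeat split; auto).
  rewrite Cmod_div by (repeat apply Cmult_neq_0; auto).
  rewrite !Cmod_mult, Cmod_RtoC by lra.
  assert (Num : Cmod (Cminus (Cmult (RtoC n) e2)
             (Cmult (Cconj z0) (Cplus (Cmult (RtoC (2 * n)) e1) (Cmult e1 e1)))) <= 4 * n * delta).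
  { eapply Rle_trans. apply Cmod_minus_le. rewrite !Cmod_mult, Cmod_conj, Hz0, Cmod_RtoC by lra.
    eapply Rle_trans. apply Rplus_le_compat_l. rewrite Rmult_1_l. apply Cmod_triangle.
    rewrite !Cmod_mult, Cmod_RtoC by lra.
    assert (Cmod e1 * Cmod e1 <= Cmod e1 * (n / 2)) by (apply Rmult_le_compat_l; lra).
    nra. }
  apply Rle_trans with (4 * n * delta / (n * (n / 2 * (n / 2)))); [|right; field; lra].
  assert (0 < n * (n / 2 * (n / 2))) by (repeat apply Rmult_lt_0_compat; lra).
  assert (n * (n / 2 * (n / 2)) <= n * (Cmod m * Cmod m))
    by (apply Rmult_le_compat_l; [lra|]; apply Rmult_le_compat; lra).
  unfold Rdiv. apply Rmult_le_compat; auto. apply Cmod_ge_0.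
  left; apply Rinv_0_lt_compat; lra.
  apply Rinv_le_contravar; lra.
Qed.

Lemma one_plus_rotation_neq_0 al A : Cmod al = 1 -> 1/2 < Re A ->
  Cplus (RtoC 1) (Cmult (Cminus al (RtoC 1)) A) <> RtoC 0.
Proof.
  intros Ha HA E.
  pose proof (Cmod2_alt al) as Ea. rewrite Ha in Ea.
  destruct al as [a b], A as [x y]. simpl in *.
  injection E as E1 E2.
  assert (E3 : (a - 1) * (1 - 2 * x) = 0).
  { transitivity ((a - 1) * (1 + ((a + - (1)) * x - (b + - 0) * y))
       + b * (0 + ((a + - (1)) * y + (b + - 0) * x)) - (a * (a * 1) + b * (b * 1) - 1 * (1 * 1)) * x).
    ring. rewrite E1, E2, <- Ea. ring. }
  assert (a = 1) by (apply Rmult_integral in E3; destruct E3; lra).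
  subst a. assert (b = 0) by nra. subst b. nra.
Qed.

(* [|a + c| = |a|] is the condition, so [al = (a + c) / a] works. *)
Lemma unimodular_shift_solution a c : Cmod c ^ 2 + 2 * Re (Cmult (Cconj c) a) = 0 ->
  exists al, Cmod al = 1 /\ Cmult (Cminus al (RtoC 1)) a = c.
Proof.
  intro Nrm. destruct (Ceq_dec a (RtoC 0)) as [a0|anz].
  - exists (RtoC 1). split; [apply Cmod_1|].
    rewrite a0, Cmult_0_r in Nrm. simpl in Nrm.
    assert (c0 : Cmod c = 0) by (pose proof (Cmod_ge_0 c); nra).
    apply Cmod_eq_0 in c0. rewrite c0, a0. ring.
  - exists (Cdiv (Cplus a c) a). split; [|field; auto].
    rewrite Cmod_div by auto.
    assert (Cmod (Cplus a c) ^ 2 = Cmod a ^ 2).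
    { rewrite !Cmod2_alt. rewrite Cmod2_alt in Nrm.
      destruct a as [a1 a2], c as [c1 c2]. simpl in *. nra. }
    assert (Eac : Cmod (Cplus a c) = Cmod a)
      by (pose proof (Cmod_ge_0 (Cplus a c)); pose proof (Cmod_ge_0 a); nra).
    rewrite Eac. apply Rdiv_diag, Rgt_not_eq, Cmod_gt_0, anz.
Qed.

Lemma Cmod_radial_pos t z0 : Cmod z0 = 1 -> 0 <= t -> Cmod (Cmult (RtoC t) z0) = t.
Proof. intros. rewrite Cmod_radial by auto. apply Rabs_pos_eq; auto. Qed.

Lemma Cmod_radial_dist t z0 : Cmod z0 = 1 -> t <= 1 -> Cmod (Cminus (Cmult (RtoC t) z0) z0) = 1 - t.
Proof.
  intros. replace (Cminus (Cmult (RtoC t) z0) z0) with (Cmult (RtoC (t - 1)) z0)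
    by (rewrite RtoC_minus; ring).
  rewrite Cmod_radial by auto. rewrite Rabs_left1; lra.
Qed.

(* Radius points [t z0] lie in the Stolz angle of aperture 2. *)
Lemma nt_limit_radial f z0 L : Cmod z0 = 1 -> nt_limit f z0 L ->
  forall eps, 0 < eps -> exists r, 0 <= r < 1 /\
    forall t, r <= t < 1 -> Cmod (Cminus (f (Cmult (RtoC t) z0)) L) < eps.
Proof.
  intros Hz0 Hf eps ep. destruct (Hf 2 ltac:(lra) eps ep) as [d [dp Hd]].
  exists (Rmax 0 (1 - d / 2)). split.
  - split; [apply Rmax_l|]. apply Rmax_lub_lt; lra.
  - intros t [Ht Ht1]. pose proof (Rmax_l 0 (1 - d / 2)). pose proof (Rmax_r 0 (1 - d / 2)).
    apply Hd; rewrite ?Cmod_radial_dist, ?Cmod_radial_pos by lra; lra.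
Qed.

Lemma radial_limit_rate f fd z0 L C0 r : Cmod z0 = 1 -> 0 < r < 1 -> nt_limit f z0 L ->
  (forall c, r <= c < 1 -> disc_derivative f (Cmult (RtoC c) z0) (fd (Cmult (RtoC c) z0))) ->
  (forall c, r <= c < 1 -> Cmod (fd (Cmult (RtoC c) z0)) <= C0) ->
  forall t, r <= t < 1 -> Cmod (Cminus (f (Cmult (RtoC t) z0)) L) <= 2 * C0 * (1 - t).
Proof.
  intros Hz0 Hr Hf Hd Hb t Ht.
  assert (C0p : 0 <= C0) by (eapply Rle_trans; [apply Cmod_ge_0 | apply (Hb r); lra]).
  apply Rle_plus_epsilon. intros eps ep.
  destruct (nt_limit_radial f z0 L Hz0 Hf eps ep) as [r' [Hr' Hlim]].
  set (s := (Rmax t r' + 1) / 2).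
  pose proof (Rmax_l t r'). pose proof (Rmax_r t r').
  assert (Rmax t r' < 1) by (apply Rmax_lub_lt; lra).
  pose proof (Hlim s ltac:(unfold s; lra)).
  pose proof (radial_lipschitz f fd z0 t s C0 Hz0 ltac:(unfold s; lra) ltac:(unfold s; lra)
                (fun c Hc => Hd c ltac:(unfold s in Hc; lra))
                (fun c Hc => Hb c ltac:(unfold s in Hc; lra))).
  pose proof (Cmod_triangle_minus (f (Cmult (RtoC t) z0)) (f (Cmult (RtoC s) z0)) L) as T.
  rewrite (Cmod_minus_sym (f (Cmult (RtoC t) z0)) (f (Cmult (RtoC s) z0))) in T.
  assert (2 * C0 * (s - t) <= 2 * C0 * (1 - t)) by (apply Rmult_le_compat_l; unfold s; lra).
  lra.
Qed.

Lemma nt_limit_radial_bound f z0 L : Cmod z0 = 1 -> nt_limit f z0 L ->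
  exists r, 0 < r < 1 /\ forall c, r <= c < 1 -> Cmod (f (Cmult (RtoC c) z0)) <= Cmod L + 1.
Proof.
  intros Hz0 Hf. destruct (nt_limit_radial f z0 L Hz0 Hf 1 ltac:(lra)) as [r [Hr Hlim]].
  exists ((r + 1) / 2). split; [lra|]. intros c Hc.
  pose proof (Hlim c ltac:(lra)) as Hc1.
  pose proof (Cmod_triangle (Cminus (f (Cmult (RtoC c) z0)) L) L) as T.
  replace (Cplus (Cminus (f (Cmult (RtoC c) z0)) L) L) with (f (Cmult (RtoC c) z0)) in T by ring.
  lra.
Qed.

(** * Hilbert space geometry *)

Section Hilbert.
Context {H : Type} (HS : HilbertSpace H).

Local Notation "x +v y" := (hadd HS x y) (at level 50, left associativity).
Local Notation "a *v x" := (hscal HS a x) (at level 40, no associativity).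
Local Notation "[< x , y >]" := (hinner HS x y).
Local Notation "0v" := (hzero HS).
Local Notation "-v x" := (hopp HS x) (at level 35).
Local Notation "x -v y" := (hsub HS x y) (at level 50, left associativity).
Local Notation nm := (hnorm HS).

Lemma hadd_0_l x : 0v +v x = x.
Proof. rewrite hadd_comm; apply hadd_zero. Qed.

Lemma hadd_opp_l x : (-v x) +v x = 0v.
Proof. rewrite hadd_comm; apply hadd_opp. Qed.

Lemma hadd_reg_l x y z : x +v y = x +v z -> y = z.
Proof.
  intro E. rewrite <- (hadd_0_l y), <- (hadd_0_l z), <- (hadd_opp_l x).
  rewrite <- !hadd_assoc, E; reflexivity.
Qed.

Lemma hscal_0_l x : RtoC 0 *v x = 0v.
Proof.
  apply (hadd_reg_l (RtoC 0 *v x)).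
  rewrite hadd_zero, <- hscal_distr_r. f_equal. apply C_eq; simpl; ring.
Qed.

Lemma hscal_0_r a : a *v 0v = 0v.
Proof.
  apply (hadd_reg_l (a *v 0v)). rewrite hadd_zero, <- hscal_distr_l, hadd_zero; reflexivity.
Qed.

Lemma hopp_scal x : -v x = RtoC (-1) *v x.
Proof.
  apply (hadd_reg_l x). rewrite hadd_opp.
  rewrite <- (hscal_one _ HS x) at 1. rewrite <- hscal_distr_r, <- (hscal_0_l x).
  f_equal. apply C_eq; simpl; ring.
Qed.

Lemma hinner_0_l y : [< 0v, y >] = RtoC 0.
Proof. rewrite <- (hscal_0_l 0v), hinner_scal_l. apply Cmult_0_l. Qed.

Lemma hinner_opp_l x y : [< -v x, y >] = Copp [< x, y >].
Proof. rewrite hopp_scal, hinner_scal_l. apply C_eq; simpl; ring. Qed.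

Lemma hinner_add_r x y z : [< x, y +v z >] = Cplus [< x, y >] [< x, z >].
Proof. rewrite hinner_conj, hinner_add_l, Cplus_conj, <- !hinner_conj; reflexivity. Qed.

Lemma hinner_scal_r a x y : [< x, a *v y >] = Cmult (Cconj a) [< x, y >].
Proof. rewrite hinner_conj, hinner_scal_l, Cmult_conj, <- hinner_conj; reflexivity. Qed.

Lemma hinner_0_r x : [< x, 0v >] = RtoC 0.
Proof. rewrite hinner_conj, hinner_0_l. apply C_eq; simpl; ring. Qed.

Lemma hinner_opp_r x y : [< x, -v y >] = Copp [< x, y >].
Proof. rewrite hinner_conj, hinner_opp_l, Copp_conj, <- hinner_conj; reflexivity. Qed.

Lemma hinner_sub_l x y v : [< x -v y, v >] = Cminus [< x, v >] [< y, v >].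
Proof. unfold hsub. rewrite hinner_add_l, hinner_opp_l. ring. Qed.

Lemma hinner_sub_r x y v : [< v, x -v y >] = Cminus [< v, x >] [< v, y >].
Proof. unfold hsub. rewrite hinner_add_r, hinner_opp_r. ring. Qed.

Lemma hsub_eq0 x y : x -v y = 0v -> x = y.
Proof.
  unfold hsub; intro E. apply (hadd_reg_l (-v y)). rewrite hadd_comm, E, hadd_opp_l; reflexivity.
Qed.

Lemma hsub_diag x : x -v x = 0v.
Proof. apply hadd_opp. Qed.

Lemma hinner_ext x y : (forall v, [< x, v >] = [< y, v >]) -> x = y.
Proof.
  intro E. apply hsub_eq0, hinner_def.
  rewrite hinner_sub_l, E. apply C_eq; simpl; ring.
Qed.

(* Vector identities are checked against an arbitrary test vector, where they
   become identities of complex numbers. *)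
Ltac hvec := apply hinner_ext; intro; unfold hsub;
  repeat rewrite ?hinner_add_l, ?hinner_scal_l, ?hinner_opp_l, ?hinner_0_l;
  unfold Cminus; ring.

Definition hnorm2 x := Re [< x, x >].

Lemma hinner_self x : [< x, x >] = RtoC (hnorm2 x).
Proof.
  unfold hnorm2. pose proof (hinner_conj _ HS x x) as E.
  destruct ([< x, x >]) as [a b]. injection E as E. apply C_eq; simpl; lra.
Qed.

Lemma hnorm2_ge_0 x : 0 <= hnorm2 x.
Proof. apply hinner_pos. Qed.

Lemma hnorm2_eq_0 x : hnorm2 x = 0 -> x = 0v.
Proof. intro E; apply hinner_def; rewrite hinner_self, E; reflexivity. Qed.

Lemma hnorm2_pos x : x <> 0v -> 0 < hnorm2 x.
Proof.
  intro nz. destruct (hnorm2_ge_0 x); auto. exfalso. apply nz, hnorm2_eq_0. auto.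
Qed.

Lemma hnorm2_0 : hnorm2 0v = 0.
Proof. unfold hnorm2; rewrite hinner_0_l; reflexivity. Qed.

Lemma hnorm2_add x y : hnorm2 (x +v y) = hnorm2 x + hnorm2 y + 2 * Re [< x, y >].
Proof.
  unfold hnorm2. rewrite hinner_add_l, !hinner_add_r, (hinner_conj _ HS y x).
  rewrite !re_plus, re_conj. ring.
Qed.

Lemma hnorm2_scal a x : hnorm2 (a *v x) = (Cmod a)^2 * hnorm2 x.
Proof.
  unfold hnorm2. rewrite hinner_scal_l, hinner_scal_r, Cmult_assoc, <- Cmod2_conj.
  rewrite hinner_self. simpl. ring.
Qed.

Lemma hnorm2_opp x : hnorm2 (-v x) = hnorm2 x.
Proof.
  unfold hnorm2. rewrite hinner_opp_l, hinner_opp_r. destruct ([< x, x >]); simpl; ring.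
Qed.

Lemma hnorm2_add_orth a b : Re [< a, b >] = 0 -> hnorm2 (a +v b) = hnorm2 a + hnorm2 b.
Proof. intro E. rewrite hnorm2_add, E. ring. Qed.

Lemma hnorm_sqr x : (nm x)^2 = hnorm2 x.
Proof. unfold hnorm. rewrite <- Rsqr_pow2. apply Rsqr_sqrt, hnorm2_ge_0. Qed.

Lemma hnorm_ge_0 x : 0 <= nm x.
Proof. apply sqrt_pos. Qed.

Lemma hnorm_eq_0 x : nm x = 0 -> x = 0v.
Proof. intro E. apply hnorm2_eq_0. rewrite <- hnorm_sqr, E. ring. Qed.

Lemma hnorm_pos x : x <> 0v -> 0 < nm x.
Proof.
  intro nz. destruct (hnorm_ge_0 x); auto. exfalso. apply nz, hnorm_eq_0. auto.
Qed.

Lemma hnorm_0 : nm 0v = 0.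
Proof. unfold hnorm. fold (hnorm2 0v). rewrite hnorm2_0. apply sqrt_0. Qed.

Lemma hnorm_scal a x : nm (a *v x) = Cmod a * nm x.
Proof.
  unfold hnorm. fold (hnorm2 (a *v x)) (hnorm2 x). rewrite hnorm2_scal, sqrt_mult_alt.
  - rewrite <- Rsqr_pow2, sqrt_Rsqr; auto. apply Cmod_ge_0.
  - apply pow2_ge_0.
Qed.

Lemma hnorm_opp x : nm (-v x) = nm x.
Proof. unfold hnorm. fold (hnorm2 (-v x)). rewrite hnorm2_opp. reflexivity. Qed.

Lemma hnorm_le_hnorm2 x y : hnorm2 x <= hnorm2 y -> nm x <= nm y.
Proof. apply sqrt_le_1_alt. Qed.

Lemma Cauchy_Schwarz2 x y : (Cmod [< x, y >])^2 <= hnorm2 x * hnorm2 y.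
Proof.
  destruct (Req_dec (hnorm2 y) 0) as [Hy|Hy].
  { apply hnorm2_eq_0 in Hy. subst y. rewrite hinner_0_r, hnorm2_0, Cmod_0. lra. }
  assert (ny : 0 < hnorm2 y) by (pose proof (hnorm2_ge_0 y); lra).
  set (c := Cdiv [< x, y >] (RtoC (hnorm2 y))).
  (* expand [0 <= |x - c y|^2] for the optimal [c = <x,y>/|y|^2] *)
  pose proof (hnorm2_ge_0 (x +v (-v (c *v y)))) as N.
  rewrite hnorm2_add, hnorm2_opp, hnorm2_scal, hinner_opp_r, hinner_scal_r in N.
  assert (Ec : Re (Copp (Cmult (Cconj c) [< x, y >])) = - (Cmod [< x, y >])^2 / hnorm2 y
              /\ Cmod c ^ 2 = (Cmod [< x, y >])^2 / (hnorm2 y ^ 2)).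
  { unfold c. rewrite !Cmod2_alt. destruct ([< x, y >]) as [a b].
    unfold Cdiv, Cinv, Cconj, Cmult, Copp, Re, Im; simpl. split; field; lra. }
  destruct Ec as [E1 E2]. rewrite E1, E2 in N.
  apply Rmult_le_reg_r with (/ hnorm2 y). apply Rinv_0_lt_compat; lra.
  replace (hnorm2 x * hnorm2 y * / hnorm2 y) with (hnorm2 x) by (field; lra).
  replace (Cmod [< x, y >] ^ 2 / hnorm2 y ^ 2 * hnorm2 y) with (Cmod [< x, y >] ^ 2 / hnorm2 y)
    in N by (field; lra).
  unfold Rdiv in N. lra.
Qed.

Lemma Cauchy_Schwarz x y : Cmod [< x, y >] <= nm x * nm y.
Proof.
  pose proof (Cauchy_Schwarz2 x y) as E. rewrite <- !hnorm_sqr in E.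
  apply Rsqr_incr_0_var. rewrite !Rsqr_pow2. nra.
  pose proof (hnorm_ge_0 x); pose proof (hnorm_ge_0 y); nra.
Qed.

Lemma hnorm_triangle x y : nm (x +v y) <= nm x + nm y.
Proof.
  apply Rsqr_incr_0_var.
  2: { pose proof (hnorm_ge_0 x); pose proof (hnorm_ge_0 y); lra. }
  rewrite !Rsqr_pow2, hnorm_sqr, hnorm2_add, <- !hnorm_sqr.
  pose proof (Cauchy_Schwarz x y). pose proof (Re_le_Cmod ([< x, y >])). nra.
Qed.

Lemma hnorm_sub_triangle x y z : nm (x -v z) <= nm (x -v y) + nm (y -v z).
Proof. replace (x -v z) with ((x -v y) +v (y -v z)) by hvec. apply hnorm_triangle. Qed.

Lemma hnorm_sub_sym x y : nm (x -v y) = nm (y -v x).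
Proof. replace (x -v y) with (-v (y -v x)) by hvec. apply hnorm_opp. Qed.

Lemma hnorm_sub_eq_0 x y : nm (x -v y) = 0 -> x = y.
Proof. intro E. apply hsub_eq0, hnorm_eq_0, E. Qed.

Lemma hinner_le_hnorm x e : hnorm2 e = 1 -> Cmod [< x, e >] <= nm x.
Proof.
  intro He. pose proof (Cauchy_Schwarz x e) as CS.
  unfold hnorm at 2 in CS. fold (hnorm2 e) in CS. rewrite He, sqrt_1, Rmult_1_r in CS. auto.
Qed.

Definition hlim (u : nat -> H) (l : H) : Prop :=
  forall eps, 0 < eps -> exists N, forall n, (N <= n)%nat -> nm (u n -v l) < eps.

Lemma hcauchy_lim (u : nat -> H) :
  (forall eps, 0 < eps -> exists N, forall m n, (N <= m)%nat -> (N <= n)%nat ->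
        nm (u m -v u n) < eps) -> exists l, hlim u l.
Proof. exact (hcomplete _ HS u). Qed.

Lemma geometric_small c K : 0 <= c < 1 -> 0 <= K ->
  forall eps, 0 < eps -> exists N, forall n, (N <= n)%nat -> c ^ n * K < eps.
Proof.
  intros [c0 c1] Kp eps ep.
  destruct (pow_lt_1_zero c ltac:(rewrite Rabs_pos_eq; lra) (eps / (K + 1)))
    as [N HN]; [apply Rdiv_lt_0_compat; lra|].
  exists N. intros n Hn. specialize (HN n Hn). rewrite Rabs_pos_eq in HN by (apply pow_le; lra).
  apply Rle_lt_trans with (eps / (K + 1) * K). apply Rmult_le_compat_r; lra.
  replace (eps / (K + 1) * K) with (eps - eps / (K + 1)) by (field; lra).
  assert (0 < eps / (K + 1)) by (apply Rdiv_lt_0_compat; lra). lra.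
Qed.

Section Contraction.
Variables (T : H -> H) (c : R).
Hypothesis c_range : 0 <= c < 1.
Hypothesis T_contr : forall a b, nm (T a -v T b) <= c * nm (a -v b).

Let u n := Nat.iter n T 0v.
Let d0 := nm (u 1%nat -v u 0%nat).

Lemma contraction_step n : nm (u (S n) -v u n) <= c ^ n * d0.
Proof.
  induction n as [|n IH]. { rewrite pow_O, Rmult_1_l. apply Rle_refl. }
  change (nm (T (u (S n)) -v T (u n)) <= c ^ S n * d0).
  eapply Rle_trans. apply T_contr. rewrite <- tech_pow_Rmult.
  pose proof (pow_le c n (proj1 c_range)). nra.
Qed.

Lemma contraction_tail n m : (n <= m)%nat -> nm (u m -v u n) <= c ^ n * (d0 / (1 - c)).
Proof.
  intro Hnm. replace m with (n + (m - n))%nat by lia. generalize (m - n)%nat as j.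
  assert (d0p : 0 <= d0) by apply hnorm_ge_0.
  pose proof (pow_le c n (proj1 c_range)).
  intro j. apply Rle_trans with (c ^ n * d0 * (1 - c ^ j) / (1 - c)).
  - induction j as [|j IH].
    + rewrite Nat.add_0_r, hsub_diag, hnorm_0. simpl. right. field. lra.
    + eapply Rle_trans. apply (hnorm_sub_triangle _ (u (n + j)%nat)).
      replace (n + S j)%nat with (S (n + j)) by lia.
      eapply Rle_trans. apply Rplus_le_compat. apply contraction_step. apply IH.
      rewrite pow_add. right. simpl. field. lra.
  - pose proof (pow_le c j (proj1 c_range)).
    assert (0 < / (1 - c)) by (apply Rinv_0_lt_compat; lra).
    assert (0 <= c ^ n * d0 * / (1 - c) * c ^ j) by (repeat apply Rmult_le_pos; lra).
    replace (c ^ n * d0 * (1 - c ^ j) / (1 - c))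
      with (c ^ n * (d0 / (1 - c)) - c ^ n * d0 * / (1 - c) * c ^ j) by (field; lra).
    lra.
Qed.

Lemma contraction_fixed_point : exists k, T k = k.
Proof.
  set (K := d0 / (1 - c)).
  assert (Kp : 0 <= K) by (apply Rmult_le_pos; [apply hnorm_ge_0 | left; apply Rinv_0_lt_compat; lra]).
  destruct (hcauchy_lim u) as [l Hl].
  { intros eps ep. destruct (geometric_small c K c_range Kp (eps/2)) as [N HN]; [lra|].
    exists N. intros m n Hm Hn.
    eapply Rle_lt_trans. apply (hnorm_sub_triangle _ (u N)).
    rewrite (hnorm_sub_sym (u N)).
    pose proof (contraction_tail N m Hm). pose proof (contraction_tail N n Hn).
    specialize (HN N (le_n _)). unfold K in HN. lra. }
  exists l. apply hnorm_sub_eq_0.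
  destruct (Req_dec (nm (T l -v l)) 0) as [|Hne]; auto. exfalso.
  assert (ep : 0 < nm (T l -v l)) by (pose proof (hnorm_ge_0 (T l -v l)); lra).
  destruct (Hl (nm (T l -v l) / 2)) as [N HN]; [lra|].
  pose proof (HN N (le_n _)). pose proof (HN (S N) (le_S _ _ (le_n _))).
  pose proof (hnorm_sub_triangle (T l) (T (u N)) l).
  pose proof (T_contr l (u N)) as HT. rewrite (hnorm_sub_sym l (u N)) in HT.
  pose proof (hnorm_ge_0 (u N -v l)).
  change (u (S N)) with (T (u N)) in *. nra.
Qed.

End Contraction.

Definition hclosure (T : H -> Prop) (v : H) : Prop :=
  forall eps, 0 < eps -> exists y, T y /\ nm (v -v y) < eps.

Lemma hclosure_incl (T : H -> Prop) v : T v -> hclosure T v.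
Proof. intros Tv eps ep. exists v. split; auto. rewrite hsub_diag, hnorm_0. auto. Qed.

Lemma hclosure_subspace (T : H -> Prop) :
  T 0v -> (forall x y, T x -> T y -> T (x +v y)) -> (forall a x, T x -> T (a *v x)) ->
  closed_subspace HS (hclosure T).
Proof.
  intros T0 Tadd Tscal. split; [|split; [|split]].
  - apply hclosure_incl; auto.
  - intros x y Hx Hy eps ep.
    destruct (Hx (eps/2)) as [x' [Tx' Hx']]; [lra|].
    destruct (Hy (eps/2)) as [y' [Ty' Hy']]; [lra|].
    exists (x' +v y'). split; auto.
    replace ((x +v y) -v (x' +v y')) with ((x -v x') +v (y -v y')) by hvec.
    eapply Rle_lt_trans. apply hnorm_triangle. lra.
  - intros a x Hx eps ep.
    pose proof (Cmod_ge_0 a).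
    destruct (Hx (eps / (Cmod a + 1))) as [x' [Tx' Hx']]; [apply Rdiv_lt_0_compat; lra|].
    exists (a *v x'). split; auto.
    replace (a *v x -v a *v x') with (a *v (x -v x')) by hvec.
    rewrite hnorm_scal. pose proof (hnorm_ge_0 (x -v x')).
    apply Rle_lt_trans with (Cmod a * (eps / (Cmod a + 1))).
    + apply Rmult_le_compat_l; lra.
    + apply Rmult_lt_reg_r with (Cmod a + 1); [lra|].
      replace (Cmod a * (eps / (Cmod a + 1)) * (Cmod a + 1)) with (Cmod a * eps) by (field; lra).
      nra.
  - intros u l Hu Hl eps ep.
    destruct (Hl (eps/2)) as [N HN]; [lra|].
    destruct (Hu N (eps/2)) as [y [Ty Hy]]; [lra|].
    exists y. split; auto.
    eapply Rle_lt_trans. apply (hnorm_sub_triangle _ (u N)).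
    rewrite hnorm_sub_sym. specialize (HN N (le_n _)). lra.
Qed.

Lemma hclosure_orth (T : H -> Prop) q p :
  (forall y, T y -> [< y, q >] = RtoC 0) -> hclosure T p -> [< p, q >] = RtoC 0.
Proof.
  intros HT Hp. apply Cmod_eq_0.
  pose proof (Cmod_ge_0 ([< p, q >])).
  destruct (Req_dec (Cmod [< p, q >]) 0) as [|Hne]; auto. exfalso.
  set (e := Cmod [< p, q >]) in *.
  pose proof (hnorm_ge_0 q).
  destruct (Hp (e / (nm q + 1))) as [y [Ty Hy]]; [apply Rdiv_lt_0_compat; lra|].
  assert (E : [< p, q >] = [< p -v y, q >]) by (rewrite hinner_sub_l, (HT y Ty); ring).
  assert (e <= nm (p -v y) * nm q) by (unfold e; rewrite E; apply Cauchy_Schwarz).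
  assert (nm (p -v y) * nm q <= e / (nm q + 1) * nm q) by (apply Rmult_le_compat_r; lra).
  assert (e / (nm q + 1) * nm q < e).
  { replace (e / (nm q + 1) * nm q) with (e - e / (nm q + 1)) by (field; lra).
    assert (0 < e / (nm q + 1)) by (apply Rdiv_lt_0_compat; lra). lra. }
  lra.
Qed.

Lemma inv_INR_S_small eps : 0 < eps -> exists N, forall n, (N <= n)%nat -> / INR (S n) < eps.
Proof.
  intro ep. destruct (archimed_cor1 eps ep) as [N [HN Np]]. exists N. intros n Hn.
  eapply Rle_lt_trans; [|apply HN].
  apply Rinv_le_contravar. apply lt_0_INR; lia. apply le_INR; lia.
Qed.

Lemma inv_INR_S_range n : 0 < / INR (S n) <= 1.
Proof.
  split. apply Rinv_0_lt_compat, lt_0_INR; lia.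
  rewrite <- Rinv_1. apply Rinv_le_contravar. lra. apply (le_INR 1). lia.
Qed.

Section Projection.
Variables (M : H -> Prop) (x : H).
Hypothesis M_closed : closed_subspace HS M.

Lemma distance_inf : exists d, 0 <= d /\ (forall s, M s -> d <= nm (x -v s)) /\
  (forall eps, 0 < eps -> exists s, M s /\ nm (x -v s) < d + eps).
Proof.
  destruct M_closed as [S0 _].
  set (E := fun r => exists s, M s /\ r = - nm (x -v s)).
  destruct (completeness E) as [m [Hub Hlub]].
  { exists 0. intros r [s [_ ->]]. pose proof (hnorm_ge_0 (x -v s)). lra. }
  { exists (- nm (x -v 0v)), 0v. auto. }
  exists (- m). split; [|split].
  - enough (m <= 0) by lra. apply Hlub. intros r [s [_ ->]]. pose proof (hnorm_ge_0 (x -v s)). lra.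
  - intros s Ss. enough (- nm (x -v s) <= m) by lra. apply Hub. exists s. auto.
  - intros eps ep. apply NNPP. intro Hn.
    enough (m <= m - eps) by lra. apply Hlub.
    intros r [s [Ss ->]]. apply Rnot_lt_le. intro Hl. apply Hn. exists s. split; auto. lra.
Qed.

(* Parallelogram law applied to [x - a] and [x - b], with the midpoint of [a], [b] in [M]. *)
Lemma near_minimizers_close d a b ea eb : 0 <= d ->
  (forall s, M s -> d <= nm (x -v s)) -> 0 <= ea <= 1 -> 0 <= eb <= 1 -> M a -> M b ->
  nm (x -v a) <= d + ea -> nm (x -v b) <= d + eb ->
  hnorm2 (a -v b) <= 4 * (d + 1) * (ea + eb).
Proof.
  destruct M_closed as [_ [Sadd [Sscal _]]].
  intros dp Hlow Hea Heb Sa Sb Ha Hb.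
  set (mid := RtoC (/2) *v (a +v b)).
  assert (Hpar : hnorm2 (RtoC 2 *v (x -v mid)) + hnorm2 (a -v b)
                 = 2 * hnorm2 (x -v a) + 2 * hnorm2 (x -v b)).
  { replace (RtoC 2 *v (x -v mid)) with ((x -v a) +v (x -v b)).
    replace (a -v b) with ((x -v b) +v -v (x -v a)) by hvec.
    rewrite !hnorm2_add, hnorm2_opp, hinner_opp_r, re_opp.
    rewrite (hinner_conj _ HS (x -v b)), re_conj. ring.
    unfold mid. apply hinner_ext; intro; unfold hsub;
      repeat rewrite ?hinner_add_l, ?hinner_scal_l, ?hinner_opp_l.
    apply C_eq; simpl; field. }
  rewrite hnorm2_scal, Cmod_RtoC, <- !hnorm_sqr in Hpar by lra.
  pose proof (Hlow mid (Sscal _ _ (Sadd _ _ Sa Sb))).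
  pose proof (hnorm_ge_0 (x -v a)). pose proof (hnorm_ge_0 (x -v b)).
  assert (d ^ 2 <= nm (x -v mid) ^ 2) by (apply pow_incr; lra).
  assert (nm (x -v a) ^ 2 <= (d + ea) ^ 2) by (apply pow_incr; lra).
  assert (nm (x -v b) ^ 2 <= (d + eb) ^ 2) by (apply pow_incr; lra).
  assert (ea * ea <= ea) by nra. assert (eb * eb <= eb) by nra.
  rewrite <- hnorm_sqr. nra.
Qed.

Lemma minimizer_orth p : M p -> (forall s, M s -> hnorm2 (x -v p) <= hnorm2 (x -v s)) ->
  orth HS M (x -v p).
Proof.
  destruct M_closed as [_ [Sadd [Sscal _]]].
  intros Sp Hmin s' Ss'.
  set (q := x -v p). set (c := [< s', q >]).
  set (t := / (hnorm2 s' + 1)).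
  pose proof (hnorm2_ge_0 s').
  assert (tp : 0 < t) by (apply Rinv_0_lt_compat; lra).
  assert (ts : t * hnorm2 s' < 1).
  { unfold t. apply Rmult_lt_reg_l with (hnorm2 s' + 1); [lra|]. field_simplify; lra. }
  (* compare with the competitor [p + t conj(c) s'] *)
  pose proof (Hmin _ (Sadd _ _ Sp (Sscal (Cmult (RtoC t) (Cconj c)) _ Ss'))) as Hm.
  replace (x -v (p +v Cmult (RtoC t) (Cconj c) *v s'))
    with (q +v -v (Cmult (RtoC t) (Cconj c) *v s')) in Hm by (unfold q; hvec).
  rewrite hnorm2_add, hnorm2_opp, hnorm2_scal, hinner_opp_r, hinner_scal_r in Hm.
  rewrite (hinner_conj _ HS q s'), Cmod_mult, Cmod_conj, Cmod_RtoC in Hm by lra. fold c in Hm.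
  replace (Re (Copp (Cmult (Cconj (Cmult (RtoC t) (Cconj c))) (Cconj c)))) with (- t * (Cmod c)^2)
    in Hm by (rewrite Cmod2_alt; destruct c; simpl; ring).
  change (hnorm2 (x -v p)) with (hnorm2 q) in Hm.
  assert (Cmod c ^ 2 <= 0).
  { assert (0 <= t * (Cmod c)^2 * (t * hnorm2 s' - 2)).
    { replace (t * (Cmod c)^2 * (t * hnorm2 s' - 2))
        with ((t * Cmod c) ^ 2 * hnorm2 s' + 2 * (- t * Cmod c ^ 2)) by ring. lra. }
    assert (0 <= t * (Cmod c)^2) by nra. nra. }
  apply Cmod_eq_0. pose proof (Cmod_ge_0 c). nra.
Qed.

Lemma orth_projection : exists p, M p /\ orth HS M (x -v p).
Proof.
  destruct distance_inf as [d [dp [Hlow Happ]]].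
  destruct (choice (fun (n : nat) s => M s /\ nm (x -v s) < d + / INR (S n))) as [s Hs].
  { intro n. apply Happ. apply inv_INR_S_range. }
  assert (Hsq : forall m n, hnorm2 (s m -v s n) <= 4 * (d + 1) * (/ INR (S m) + / INR (S n))).
  { intros m n. destruct (Hs m), (Hs n).
    pose proof (inv_INR_S_range m). pose proof (inv_INR_S_range n).
    apply near_minimizers_close; auto; lra. }
  destruct (hcauchy_lim s) as [p Hp].
  { intros eps ep.
    destruct (inv_INR_S_small (eps * eps / (8 * (d + 1)))) as [N HN].
    { apply Rdiv_lt_0_compat; nra. }
    exists N. intros m n Hm Hn.
    unfold hnorm. rewrite <- (sqrt_Rsqr eps) by lra.
    apply sqrt_lt_1_alt. split; [apply hnorm2_ge_0|]. unfold Rsqr.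
    eapply Rle_lt_trans. apply Hsq.
    apply Rlt_le_trans with (4 * (d + 1) * (2 * (eps * eps / (8 * (d + 1))))).
    - apply Rmult_lt_compat_l; [lra|]. pose proof (HN m Hm). pose proof (HN n Hn). lra.
    - right. field. lra. }
  assert (Sp : M p) by (apply (proj2 (proj2 (proj2 M_closed)) s); auto; intro n; apply Hs).
  exists p. split; auto. apply minimizer_orth; auto.
  intros s' Ss'. rewrite <- !hnorm_sqr. apply pow_incr. split; [apply hnorm_ge_0|].
  apply Rle_trans with d; auto.
  apply Rle_plus_epsilon. intros e ep.
  destruct (Hp (e / 2)) as [N HN]; [lra|].
  destruct (inv_INR_S_small (e / 2)) as [N' HN']; [lra|].
  set (K := max N N').
  pose proof (HN K (Nat.le_max_l _ _)). pose proof (HN' K (Nat.le_max_r _ _)).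
  pose proof (hnorm_sub_triangle x (s K) p). destruct (Hs K). lra.
Qed.

End Projection.

(** * Unitary operators and their resolvents *)

Section Unitary.
Context {U : H -> H} (HU : unitary HS U).

Lemma unitary_add x y : U (x +v y) = U x +v U y.
Proof. apply HU. Qed.

Lemma unitary_scal a x : U (a *v x) = a *v U x.
Proof. apply HU. Qed.

Lemma unitary_hnorm x : nm (U x) = nm x.
Proof. apply HU. Qed.

Lemma unitary_hnorm2 x : hnorm2 (U x) = hnorm2 x.
Proof. rewrite <- !hnorm_sqr, unitary_hnorm. auto. Qed.

Lemma unitary_0 : U 0v = 0v.
Proof. rewrite <- (hscal_0_l 0v), unitary_scal, !hscal_0_l. auto. Qed.

Lemma unitary_sub x y : U (x -v y) = U x -v U y.
Proof. unfold hsub. rewrite unitary_add, !hopp_scal, unitary_scal. auto. Qed.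

Lemma unitary_hinner x y : [< U x, U y >] = [< x, y >].
Proof.
  assert (Hre : forall x y, Re [< U x, U y >] = Re [< x, y >]).
  { intros a b. pose proof (unitary_hnorm2 (a +v b)) as E.
    rewrite unitary_add, !hnorm2_add, !unitary_hnorm2 in E. lra. }
  apply C_eq. apply Hre.
  pose proof (Hre x (Ci *v y)) as E. rewrite unitary_scal, !hinner_scal_r in E.
  destruct ([< U x, U y >]), ([< x, y >]). simpl in *. lra.
Qed.

Lemma unitary_inj x y : U x = U y -> x = y.
Proof.
  intro E. apply hnorm_sub_eq_0. rewrite <- unitary_hnorm, unitary_sub, E, hsub_diag.
  apply hnorm_0.
Qed.

Definition uinv (y : H) : H :=
  proj1_sig (constructive_indefinite_description _ (proj2 (proj2 (proj2 HU)) y)).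

Lemma uinvK y : U (uinv y) = y.
Proof. unfold uinv. destruct (constructive_indefinite_description _ _). auto. Qed.

Lemma unitaryK x : uinv (U x) = x.
Proof. apply unitary_inj, uinvK. Qed.

Lemma uinv_add x y : uinv (x +v y) = uinv x +v uinv y.
Proof. apply unitary_inj. rewrite unitary_add, !uinvK. auto. Qed.

Lemma uinv_scal a x : uinv (a *v x) = a *v uinv x.
Proof. apply unitary_inj. rewrite unitary_scal, !uinvK. auto. Qed.

Lemma uinv_sub x y : uinv (x -v y) = uinv x -v uinv y.
Proof. apply unitary_inj. rewrite unitary_sub, !uinvK. auto. Qed.

Lemma uinv_hnorm x : nm (uinv x) = nm x.
Proof. rewrite <- (uinvK x) at 2. rewrite unitary_hnorm. auto. Qed.

Lemma uinv_0 : uinv 0v = 0v.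
Proof. apply unitary_inj. rewrite uinvK, unitary_0. auto. Qed.

Lemma unitary_adjoint x y : [< U x, y >] = [< x, uinv y >].
Proof. rewrite <- (uinvK y) at 1. apply unitary_hinner. Qed.

Lemma uinv_adjoint x y : [< uinv x, y >] = [< x, U y >].
Proof. rewrite <- (uinvK x) at 2. rewrite unitary_hinner. auto. Qed.

Lemma uinv_eigen h z0 : Cmod z0 = 1 -> U h = z0 *v h -> uinv h = Cconj z0 *v h.
Proof.
  intros Hz0 E. apply unitary_inj.
  rewrite uinvK, unitary_scal, E, hscal_assoc, Cmult_conj_unit_l, hscal_one by auto. auto.
Qed.

Lemma resolvent_exists z v : Cmod z < 1 -> exists k, k -v z *v uinv k = v.
Proof.
  intro Hz.
  destruct (contraction_fixed_point (fun k => v +v z *v uinv k) (Cmod z)) as [k Hk].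
  { split; auto. apply Cmod_ge_0. }
  { intros a b. right.
    replace ((v +v z *v uinv a) -v (v +v z *v uinv b)) with (z *v (uinv (a -v b)))
      by (rewrite uinv_sub; hvec).
    rewrite hnorm_scal, uinv_hnorm. auto. }
  exists k. rewrite <- Hk at 1. hvec.
Qed.

(* [res z v] is [(U - z)^-1 U v], written as the solution [k] of [k - z U^-1 k = v];
   outside the disc it is an irrelevant junk value. *)
Definition res (z : C) (v : H) : H :=
  match Rlt_dec (Cmod z) 1 with
  | left h => proj1_sig (constructive_indefinite_description _ (resolvent_exists z v h))
  | right _ => 0v
  end.

Lemma res_spec z v : Cmod z < 1 -> res z v -v z *v uinv (res z v) = v.
Proof.
  intro h. unfold res. destruct (Rlt_dec (Cmod z) 1); [|lra].
  destruct (constructive_indefinite_description _ _). auto.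
Qed.

Lemma res_unique z v k : Cmod z < 1 -> k -v z *v uinv k = v -> k = res z v.
Proof.
  intros Hz E. apply hsub_eq0.
  set (d := k -v res z v).
  assert (Ed : d = z *v uinv d).
  { apply hsub_eq0. unfold d. rewrite uinv_sub.
    transitivity ((k -v z *v uinv k) -v (res z v -v z *v uinv (res z v))); [hvec|].
    rewrite E, res_spec, hsub_diag; auto. }
  apply hnorm_eq_0.
  assert (nm d = Cmod z * nm d) by (rewrite Ed at 1; rewrite hnorm_scal, uinv_hnorm; auto).
  pose proof (hnorm_ge_0 d). pose proof (Cmod_ge_0 z). nra.
Qed.

Lemma res_bound z v : Cmod z < 1 -> nm (res z v) <= nm v / (1 - Cmod z).
Proof.
  intro Hz. pose proof (res_spec z v Hz) as F. set (k := res z v) in *.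
  pose proof (hnorm_triangle (k -v z *v uinv k) (z *v uinv k)) as T.
  replace (k -v z *v uinv k +v z *v uinv k) with k in T by hvec.
  rewrite hnorm_scal, uinv_hnorm, F in T.
  apply Rmult_le_reg_l with (1 - Cmod z); [lra|].
  replace ((1 - Cmod z) * (nm v / (1 - Cmod z))) with (nm v) by (field; lra). lra.
Qed.

Lemma res_add z v w : Cmod z < 1 -> res z (v +v w) = res z v +v res z w.
Proof.
  intro Hz. symmetry. apply res_unique; auto. rewrite uinv_add.
  transitivity ((res z v -v z *v uinv (res z v)) +v (res z w -v z *v uinv (res z w))); [hvec|].
  rewrite !res_spec; auto.
Qed.

Lemma res_scal z a v : Cmod z < 1 -> res z (a *v v) = a *v res z v.
Proof.
  intro Hz. symmetry. apply res_unique; auto. rewrite uinv_scal.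
  transitivity (a *v (res z v -v z *v uinv (res z v))); [hvec|].
  rewrite !res_spec; auto.
Qed.

Lemma res_unitary z v : Cmod z < 1 -> U (res z v) -v z *v res z v = U v.
Proof.
  intro Hz. rewrite <- (res_spec z v Hz) at 3. rewrite unitary_sub, unitary_scal, uinvK. auto.
Qed.

Lemma res_of_unitary z k v : Cmod z < 1 -> U k -v z *v k = U v -> k = res z v.
Proof.
  intros Hz E. apply res_unique; auto. apply unitary_inj.
  rewrite unitary_sub, unitary_scal, uinvK. auto.
Qed.

Lemma res_identity z z' v : Cmod z < 1 -> Cmod z' < 1 ->
  res z' v -v res z v = Cminus z' z *v res z' (uinv (res z v)).
Proof.
  intros Hz Hz'. rewrite <- res_scal by auto. apply res_unique; auto.
  rewrite uinv_sub.
  transitivity ((res z' v -v z' *v uinv (res z' v)) -v (res z v -v z *v uinv (res z v))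
                 -v Cminus z z' *v uinv (res z v)); [hvec|].
  rewrite !res_spec, hsub_diag by auto. hvec.
Qed.

Lemma res_eigen z z0 q : Cmod z < 1 -> Cmod z0 = 1 -> U q = z0 *v q ->
  res z q = Cinv (Cminus (RtoC 1) (Cmult z (Cconj z0))) *v q.
Proof.
  intros Hz Hz0 Hq. pose proof (one_minus_conj_unit_neq_0 z z0 Hz0 Hz) as unz.
  symmetry. apply res_unique; auto.
  rewrite uinv_scal, (uinv_eigen q z0 Hz0 Hq).
  apply hinner_ext; intro; unfold hsub;
    repeat rewrite ?hinner_add_l, ?hinner_scal_l, ?hinner_opp_l.
  field. auto.
Qed.

End Unitary.

(** * The characteristic function at a boundary point *)

Section CharacteristicFunction.
Context {U : H -> H} (HU : unitary HS U) (psi : H).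
Hypothesis psi_unit : hnorm2 psi = 1.

Local Notation Res := (res HU).
Local Notation Ui := (uinv HU).

(* [res_form z = <(U - z)^-1 U psi, psi>]; the characteristic function of the
   theorem is [1 - 1 / res_form]. *)
Definition res_form z := [< Res z psi, psi >].
Definition char_fun z := Cminus (RtoC 1) (Cinv (res_form z)).
Definition res_form_deriv z := [< Res z (Ui (Res z psi)), psi >].

Lemma res_form_Re z : Cmod z < 1 ->
  2 * Re (res_form z) - 1 = (1 - Cmod z ^ 2) * hnorm2 (Res z psi).
Proof.
  intro Hz. pose proof (res_spec HU z psi Hz) as F.
  set (k := Res z psi) in *. unfold res_form. fold k.
  assert (E1 : hnorm2 psi = hnorm2 k + Cmod z ^ 2 * hnorm2 k - 2 * Re (Cmult (Cconj z) [< k, Ui k >])).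
  { rewrite <- F. unfold hsub at 1. rewrite hnorm2_add, hnorm2_opp, hnorm2_scal.
    rewrite <- (hnorm_sqr (Ui k)), uinv_hnorm, hnorm_sqr.
    rewrite hinner_opp_r, hinner_scal_r, re_opp. ring. }
  rewrite <- F, hinner_sub_r, hinner_scal_r, hinner_self.
  rewrite psi_unit in E1.
  destruct (Cmult (Cconj z) [< k, Ui k >]) as [c1 c2]. simpl in E1 |- *. lra.
Qed.

Lemma res_psi_neq_0 z : Cmod z < 1 -> Res z psi <> 0v.
Proof.
  intros Hz E. pose proof (res_spec HU z psi Hz) as F.
  rewrite E, uinv_0, hscal_0_r, hsub_diag in F.
  rewrite <- F, hnorm2_0 in psi_unit. lra.
Qed.

Lemma res_form_Re_gt z : Cmod z < 1 -> 1/2 < Re (res_form z).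
Proof.
  intro Hz. pose proof (res_form_Re z Hz).
  pose proof (hnorm2_pos _ (res_psi_neq_0 z Hz)).
  assert (Cmod z ^ 2 < 1) by (pose proof (Cmod_ge_0 z); nra).
  nra.
Qed.

Lemma res_form_Cmod_ge z : Cmod z < 1 -> 1/2 <= Cmod (res_form z).
Proof. intro Hz. pose proof (res_form_Re_gt z Hz). pose proof (Re_le_Cmod (res_form z)). lra. Qed.

Lemma res_form_neq_0 z : Cmod z < 1 -> res_form z <> RtoC 0.
Proof. intro Hz. apply Cmod_neq_0. pose proof (res_form_Cmod_ge z Hz). lra. Qed.

Lemma res_form_taylor z z' : Cmod z < 1 -> Cmod z' < 1 ->
  Cminus (Cminus (res_form z') (res_form z)) (Cmult (Cminus z' z) (res_form_deriv z)) =
  Cmult (Cmult (Cminus z' z) (Cminus z' z)) [< Res z' (Ui (Res z (Ui (Res z psi)))), psi >].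
Proof.
  intros Hz Hz'. unfold res_form, res_form_deriv.
  set (X := Ui (Res z psi)).
  assert (E1 : Cminus [< Res z' psi, psi >] [< Res z psi, psi >] = Cmult (Cminus z' z) [< Res z' X, psi >])
    by (rewrite <- hinner_sub_l, res_identity, hinner_scal_l; auto).
  assert (E2 : Cminus [< Res z' X, psi >] [< Res z X, psi >] =
               Cmult (Cminus z' z) [< Res z' (Ui (Res z X)), psi >])
    by (rewrite <- hinner_sub_l, res_identity, hinner_scal_l; auto).
  rewrite E1. replace (Cmult (Cmult (Cminus z' z) (Cminus z' z)) [< Res z' (Ui (Res z X)), psi >])
    with (Cmult (Cminus z' z) (Cmult (Cminus z' z) [< Res z' (Ui (Res z X)), psi >])) by ring.
  rewrite <- E2. ring.
Qed.

Lemma char_fun_derivative z : Cmod z < 1 ->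
  disc_derivative char_fun z (Cdiv (res_form_deriv z) (Cmult (res_form z) (res_form z))).
Proof.
  intro Hz. unfold char_fun.
  set (r0 := 1 - Cmod z). assert (r0p : 0 < r0) by (unfold r0; lra).
  apply (disc_derivative_one_minus_inv res_form z (res_form_deriv z) (2 / (r0 ^ 3)) (r0 / 2)).
  - lra.
  - apply Rmult_le_pos; [lra|]. left. apply Rinv_0_lt_compat, pow_lt; auto.
  - apply res_form_Cmod_ge; auto.
  - intros z' Hz' Hd. split. apply res_form_Cmod_ge; auto.
    rewrite res_form_taylor, !Cmod_mult by auto.
    assert (1 - Cmod z' >= r0 / 2) by (pose proof (Cmod_triangle_rev z' z); unfold r0 in *; lra).
    assert (B : Cmod [< Res z' (Ui (Res z (Ui (Res z psi)))), psi >] <= 2 / r0 ^ 3).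
    { eapply Rle_trans. apply hinner_le_hnorm; auto.
      eapply Rle_trans. apply res_bound; auto. rewrite uinv_hnorm.
      assert (B2 : nm (Res z (Ui (Res z psi))) <= 1 / r0 ^ 2).
      { eapply Rle_trans. apply res_bound; auto. rewrite uinv_hnorm. fold r0.
        eapply Rle_trans. apply Rmult_le_compat_r. left; apply Rinv_0_lt_compat; auto.
        apply res_bound; auto.
        unfold hnorm. fold (hnorm2 psi). rewrite psi_unit, sqrt_1. fold r0. right. field. lra. }
      apply Rle_trans with ((1 / r0 ^ 2) / (r0 / 2)); [|right; field; lra].
      unfold Rdiv. apply Rmult_le_compat. apply hnorm_ge_0. left; apply Rinv_0_lt_compat; lra.
      unfold Rdiv in B2. auto. apply Rinv_le_contravar; lra. }
    pose proof (Cmod_ge_0 (Cminus z' z)).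
    replace (Cmod (Cminus z' z) ^ 2) with (Cmod (Cminus z' z) * Cmod (Cminus z' z)) by ring.
    rewrite Rmult_comm. apply Rmult_le_compat_r; nra.
Qed.

Lemma char_fun_dist_1_ge z : Cmod z < 1 ->
  1 <= nm (Res z psi) * Cmod (Cminus (char_fun z) (RtoC 1)).
Proof.
  intro Hz. unfold char_fun.
  replace (Cminus (Cminus (RtoC 1) (Cinv (res_form z))) (RtoC 1))
    with (Copp (Cinv (res_form z))) by ring.
  rewrite Cmod_opp, Cmod_inv by (apply res_form_neq_0; auto).
  pose proof (hinner_le_hnorm (Res z psi) psi psi_unit) as Ale. fold (res_form z) in Ale.
  pose proof (res_form_Cmod_ge z Hz).
  apply Rle_trans with (Cmod (res_form z) * / Cmod (res_form z)).
  - rewrite Rinv_r by lra. lra.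
  - apply Rmult_le_compat_r; [left; apply Rinv_0_lt_compat|]; lra.
Qed.

End CharacteristicFunction.

Definition ran_shift (U : H -> H) (z0 : C) (y : H) : Prop := exists g, y = U g -v z0 *v g.

Section BoundaryPoint.
Context {U : H -> H} (HU : unitary HS U) (z0 : C).
Hypothesis z0_unit : Cmod z0 = 1.

Local Notation Res := (res HU).
Local Notation Ui := (uinv HU).

Lemma ran_shift_closure_subspace : closed_subspace HS (hclosure (ran_shift U z0)).
Proof.
  apply hclosure_subspace.
  - exists 0v. rewrite (unitary_0 HU), hscal_0_r, hsub_diag; auto.
  - intros x y [g1 ->] [g2 ->]. exists (g1 +v g2). rewrite (unitary_add HU). hvec.
  - intros a x [g ->]. exists (a *v g). rewrite (unitary_scal HU). hvec.
Qed.

Lemma eigen_orth_ran_shift h : U h = z0 *v h -> forall y, ran_shift U z0 y -> [< y, h >] = RtoC 0.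
Proof.
  intros E y [g ->]. rewrite hinner_sub_l, (unitary_adjoint HU), (uinv_eigen HU h z0) by auto.
  rewrite hinner_scal_r, hinner_scal_l, Cconj_conj. ring.
Qed.

Lemma orth_ran_shift_eigen q : (forall y, ran_shift U z0 y -> [< y, q >] = RtoC 0) -> U q = z0 *v q.
Proof.
  intro Hq. apply hsub_eq0, hnorm2_eq_0.
  assert (E : [< U q -v z0 *v q, q >] = RtoC 0) by (apply Hq; exists q; auto).
  rewrite hinner_sub_l, hinner_scal_l, hinner_self in E. apply Ceq_minus in E.
  unfold hsub. rewrite hnorm2_add, hnorm2_opp, hnorm2_scal, (unitary_hnorm2 HU), z0_unit by auto.
  rewrite hinner_opp_r, hinner_scal_r, E, Cmult_assoc, Cmult_conj_unit_l by auto. simpl. ring.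
Qed.

Lemma ran_shift_eigen_decomposition v :
  exists p q, hclosure (ran_shift U z0) p /\ U q = z0 *v q /\ v = p +v q.
Proof.
  destruct (orth_projection _ v ran_shift_closure_subspace) as [p [Cp Op]].
  exists p, (v -v p). split; auto. split; [|hvec].
  apply orth_ran_shift_eigen. intros y Ry. apply Op, hclosure_incl, Ry.
Qed.

Lemma res_ran_shift z g : Cmod z < 1 -> Res z (U g -v z0 *v g) = U g +v Cminus z z0 *v Res z g.
Proof.
  intro Hz. symmetry. apply res_unique; auto.
  rewrite uinv_add, uinv_scal, unitaryK by auto.
  transitivity (U g -v z *v g +v Cminus z z0 *v (Res z g -v z *v Ui (Res z g))); [hvec|].
  rewrite res_spec by auto. hvec.
Qed.

Lemma res_ran_shift_closure_small p : hclosure (ran_shift U z0) p ->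
  forall eps, 0 < eps -> exists del, 0 < del /\
  forall z, Cmod z < 1 -> Cmod (Cminus z z0) < del -> (1 - Cmod z) * nm (Res z p) < eps.
Proof.
  intros Hp eps ep.
  destruct (Hp (eps / 2)) as [y [[g ->] Hy]]; [lra|].
  set (G := nm g). assert (Gp : 0 <= G) by apply hnorm_ge_0.
  exists (eps / (4 * (G + 1))). split; [apply Rdiv_lt_0_compat; lra|].
  intros z Hz Hd.
  assert (r0 : 0 < 1 - Cmod z) by lra.
  pose proof (dist_unit_ge z z0 z0_unit) as Hsub.
  set (d := Cmod (Cminus z z0)) in *.
  replace p with ((p -v (U g -v z0 *v g)) +v (U g -v z0 *v g)) by hvec.
  rewrite res_add, res_ran_shift by auto.
  assert (B1 : (1 - Cmod z) * nm (Res z (p -v (U g -v z0 *v g))) <= nm (p -v (U g -v z0 *v g))).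
  { pose proof (res_bound HU z (p -v (U g -v z0 *v g)) Hz).
    replace (nm (p -v (U g -v z0 *v g)))
      with ((1 - Cmod z) * (nm (p -v (U g -v z0 *v g)) / (1 - Cmod z))) by (field; lra).
    apply Rmult_le_compat_l; lra. }
  assert (B2 : (1 - Cmod z) * nm (U g +v Cminus z z0 *v Res z g) <= 2 * d * G).
  { apply Rle_trans with ((1 - Cmod z) * (G + d * (G / (1 - Cmod z)))).
    - apply Rmult_le_compat_l; [lra|]. eapply Rle_trans. apply hnorm_triangle.
      rewrite (unitary_hnorm HU), hnorm_scal by auto. apply Rplus_le_compat_l.
      apply Rmult_le_compat_l. apply Cmod_ge_0. apply res_bound; auto.
    - replace ((1 - Cmod z) * (G + d * (G / (1 - Cmod z)))) with ((1 - Cmod z) * G + d * G)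
        by (field; lra). nra. }
  assert (2 * d * G < eps / 2).
  { assert (d * (G + 1) < eps / 4).
    { apply Rmult_lt_reg_r with (/ (G + 1)); [apply Rinv_0_lt_compat; lra|].
      rewrite Rmult_assoc, Rinv_r, Rmult_1_r by lra.
      replace (eps / 4 * / (G + 1)) with (eps / (4 * (G + 1))) by (field; lra). auto. }
    pose proof (Cmod_ge_0 (Cminus z z0)) as d0. fold d in d0. nra. }
  eapply Rle_lt_trans. apply Rmult_le_compat_l; [lra|]. apply hnorm_triangle. lra.
Qed.

Lemma res_eigen_orth z q v : Cmod z < 1 -> U q = z0 *v q ->
  [< v, q >] = RtoC 0 -> [< Res z v, q >] = RtoC 0.
Proof.
  intros Hz Hq Hv. pose proof (one_minus_conj_unit_neq_0 z z0 z0_unit Hz) as unz.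
  rewrite <- (res_spec HU z v Hz) in Hv.
  rewrite hinner_sub_l, hinner_scal_l, (uinv_adjoint HU), Hq, hinner_scal_r in Hv.
  transitivity (Cmult (Cinv (Cminus (RtoC 1) (Cmult z (Cconj z0))))
                      (Cminus [< Res z v, q >] (Cmult z (Cmult (Cconj z0) [< Res z v, q >])))).
  { field. auto. }
  rewrite Hv. ring.
Qed.

Lemma uinv_eigen_orth q v : U q = z0 *v q -> [< v, q >] = RtoC 0 -> [< Ui v, q >] = RtoC 0.
Proof. intros Hq Hv. rewrite (uinv_adjoint HU), Hq, hinner_scal_r, Hv. ring. Qed.

End BoundaryPoint.

Section EigenvalueToAngularDerivative.
Context {U : H -> H} (HU : unitary HS U) (psi : H) (z0 : C) (p q : H).
Hypotheses (psi_unit : hnorm2 psi = 1) (z0_unit : Cmod z0 = 1).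
Hypotheses (p_closure : hclosure (ran_shift U z0) p) (q_eigen : U q = z0 *v q) (q_neq_0 : q <> 0v)
           (psi_decomp : psi = p +v q).

Local Notation Res := (res HU).
Local Notation Ui := (uinv HU).
Local Notation u z := (Cminus (RtoC 1) (Cmult z (Cconj z0))).

Lemma p_orth_q : [< p, q >] = RtoC 0.
Proof. apply (hclosure_orth (ran_shift U z0)); auto. apply (eigen_orth_ran_shift HU); auto. Qed.

Lemma q_orth_p : [< q, p >] = RtoC 0.
Proof. rewrite hinner_conj, p_orth_q. apply C_eq; simpl; ring. Qed.

Lemma res_form_decomp z : Cmod z < 1 ->
  Cmult (res_form HU psi z) (u z) = Cplus (RtoC (hnorm2 q)) (Cmult (u z) [< Res z p, p >]).
Proof.
  intro Hz. pose proof (one_minus_conj_unit_neq_0 z z0 z0_unit Hz).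
  unfold res_form. rewrite psi_decomp at 1 2.
  rewrite res_add, hinner_add_l, !hinner_add_r, (res_eigen HU z z0 q) by auto.
  rewrite (res_eigen_orth HU z0 z0_unit z q p Hz q_eigen p_orth_q), !hinner_scal_l, q_orth_p,
    hinner_self.
  field. auto.
Qed.

Lemma res_form_deriv_decomp z : Cmod z < 1 ->
  Cmult (Cmult (res_form_deriv HU psi z) (u z)) (u z) =
  Cplus (Cmult (Cconj z0) (RtoC (hnorm2 q)))
        (Cmult (Cmult (u z) (u z)) [< Res z (Ui (Res z p)), p >]).
Proof.
  intro Hz. pose proof (one_minus_conj_unit_neq_0 z z0 z0_unit Hz).
  unfold res_form_deriv. rewrite psi_decomp at 1 2.
  rewrite res_add, (res_eigen HU z z0 q), uinv_add, uinv_scal, (uinv_eigen HU q z0) by auto.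
  rewrite res_add, !res_scal, (res_eigen HU z z0 q) by auto.
  rewrite hinner_add_l, !hinner_add_r, !hinner_scal_l.
  rewrite (res_eigen_orth HU z0 z0_unit z q _ Hz q_eigen
            (uinv_eigen_orth HU z0 q _ q_eigen (res_eigen_orth HU z0 z0_unit z q p Hz q_eigen p_orth_q))).
  rewrite q_orth_p, hinner_self. field. auto.
Qed.

Lemma decomp_errors_pointwise M z : 1 < M -> Cmod z < 1 ->
  Cmod (Cminus z z0) < M * (1 - Cmod z) ->
  Cmod (Cmult (u z) [< Res z p, p >]) <= M * M * (nm p + 1) * ((1 - Cmod z) * nm (Res z p)) /\
  Cmod (Cmult (Cmult (u z) (u z)) [< Res z (Ui (Res z p)), p >])
    <= M * M * (nm p + 1) * ((1 - Cmod z) * nm (Res z p)).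
Proof.
  intros HM Hz Hst.
  pose proof (hnorm_ge_0 p). pose proof (hnorm_ge_0 (Res z p)).
  set (r := 1 - Cmod z) in *. assert (rp : 0 < r) by (unfold r; lra).
  set (eta := r * nm (Res z p)). assert (0 <= eta) by (unfold eta; nra).
  rewrite <- (Cmod_one_minus_conj_unit z z0 z0_unit) in Hst.
  pose proof (Cmod_ge_0 (u z)).
  split.
  - rewrite Cmod_mult.
    pose proof (Cauchy_Schwarz (Res z p) p). pose proof (Cmod_ge_0 [< Res z p, p >]).
    apply Rle_trans with (M * r * (nm (Res z p) * nm p)); [apply Rmult_le_compat; lra|].
    replace (M * r * (nm (Res z p) * nm p)) with (M * eta * nm p) by (unfold eta; ring).
    enough (0 <= M * M * (nm p + 1) * eta - M * eta * nm p) by lra.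
    replace (M * M * (nm p + 1) * eta - M * eta * nm p) with (M * eta * ((M - 1) * (nm p + 1) + 1))
      by ring.
    repeat apply Rmult_le_pos; nra.
  - rewrite !Cmod_mult.
    assert (Cmod [< Res z (Ui (Res z p)), p >] <= nm (Res z p) / r * nm p).
    { eapply Rle_trans. apply Cauchy_Schwarz. apply Rmult_le_compat_r. apply hnorm_ge_0.
      eapply Rle_trans. apply res_bound; auto. rewrite uinv_hnorm. right; auto. }
    pose proof (Cmod_ge_0 [< Res z (Ui (Res z p)), p >]).
    apply Rle_trans with (M * r * (M * r) * (nm (Res z p) / r * nm p)).
    { assert (Cmod (u z) * Cmod (u z) <= M * r * (M * r)) by (apply Rmult_le_compat; lra).
      apply Rmult_le_compat; try nra. }
    replace (M * r * (M * r) * (nm (Res z p) / r * nm p)) with (M * M * eta * nm p)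
      by (unfold eta; field; lra).
    assert (0 <= M * M * eta) by (repeat apply Rmult_le_pos; lra). nra.
Qed.

(* In a Stolz angle [|u z| = |z - z0| < M (1 - |z|)]; this turns the decay of
   [(1 - |z|) |Res z p|] into the decay of both error terms. *)
Lemma decomp_errors_small M : 1 < M -> forall eps, 0 < eps -> exists del, 0 < del /\
  forall z, Cmod z < 1 -> Cmod (Cminus z z0) < M * (1 - Cmod z) -> Cmod (Cminus z z0) < del ->
    Cmod (Cmult (u z) [< Res z p, p >]) <= eps /\
    Cmod (Cmult (Cmult (u z) (u z)) [< Res z (Ui (Res z p)), p >]) <= eps.
Proof.
  intros HM eps ep.
  set (P := M * M * (nm p + 1)).
  pose proof (hnorm_ge_0 p).
  assert (Pp : 1 <= P) by (unfold P; replace 1 with (1 * 1 * 1) by ring;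
                            repeat apply Rmult_le_compat; lra).
  destruct (res_ran_shift_closure_small HU z0 z0_unit p p_closure (eps / P)) as [del [delp Hdel]].
  { apply Rdiv_lt_0_compat; lra. }
  exists del. split; auto. intros z Hz Hst Hd.
  assert (P * ((1 - Cmod z) * nm (Res z p)) <= eps).
  { apply Rle_trans with (P * (eps / P)); [|right; field; lra].
    apply Rmult_le_compat_l; [lra|]. left. apply Hdel; auto. }
  destruct (decomp_errors_pointwise M z HM Hz Hst) as [E1 E2].
  change (M * M * (nm p + 1)) with P in E1, E2. lra.
Qed.

Lemma char_fun_nt_estimates M : 1 < M -> forall eps, 0 < eps -> exists del, 0 < del /\
  forall z, Cmod z < 1 -> Cmod (Cminus z z0) < M * (1 - Cmod z) -> Cmod (Cminus z z0) < del ->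
    Cmod (Cminus (char_fun HU psi z) (RtoC 1)) < eps /\
    Cmod (Cminus (Cdiv (res_form_deriv HU psi z) (Cmult (res_form HU psi z) (res_form HU psi z)))
                 (Cdiv (Cconj z0) (RtoC (hnorm2 q)))) < eps.
Proof.
  intros HM eps ep.
  set (n := hnorm2 q). assert (np : 0 < n) by (apply hnorm2_pos, q_neq_0).
  set (delta := Rmin (n / 2) (eps * (n * n) / 32)).
  assert (dp : 0 < delta)
    by (apply Rmin_pos; [lra|]; apply Rdiv_lt_0_compat; [apply Rmult_lt_0_compat; nra|lra]).
  destruct (decomp_errors_small M HM delta dp) as [d1 [d1p Hd1]].
  exists (Rmin d1 (eps * n / 4)). split.
  { apply Rmin_pos; [lra|]. apply Rdiv_lt_0_compat; [apply Rmult_lt_0_compat|]; lra. }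
  intros z Hz Hst Hd.
  assert (Hda : Cmod (Cminus z z0) < d1) by (eapply Rlt_le_trans; [apply Hd|apply Rmin_l]).
  assert (Hdb : Cmod (Cminus z z0) < eps * n / 4) by (eapply Rlt_le_trans; [apply Hd|apply Rmin_r]).
  destruct (Hd1 z Hz Hst Hda) as [He1 He2].
  pose proof (one_minus_conj_unit_neq_0 z z0 z0_unit Hz) as unz.
  assert (Hdn : delta <= n / 2) by apply Rmin_l.
  pose proof (perturbed_inv_bound n (u z) (Cmult (u z) [< Res z p, p >]) np unz
                ltac:(lra)) as B1.
  pose proof (perturbed_deriv_bound n (u z) _ _ z0 delta np z0_unit unz He1 He2 Hdn) as B2.
  unfold char_fun.
  replace (res_form HU psi z) with (Cdiv (Cplus (RtoC n) (Cmult (u z) [< Res z p, p >])) (u z))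
    by (rewrite <- res_form_decomp by auto; field; auto).
  replace (res_form_deriv HU psi z)
    with (Cdiv (Cplus (Cmult (Cconj z0) (RtoC n)) (Cmult (Cmult (u z) (u z)) [< Res z (Ui (Res z p)), p >]))
               (Cmult (u z) (u z)))
    by (rewrite <- res_form_deriv_decomp by auto; field; auto).
  rewrite Cmod_one_minus_conj_unit in B1 by auto.
  split.
  - eapply Rle_lt_trans; [apply B1|].
    replace (2 * Cmod (Cminus z z0) / n) with (Cmod (Cminus z z0) * (2 / n)) by (field; lra).
    apply Rlt_le_trans with (eps * n / 4 * (2 / n)).
    + apply Rmult_lt_compat_r; [apply Rdiv_lt_0_compat|]; lra.
    + replace (eps * n / 4 * (2 / n)) with (eps / 2) by (field; lra). lra.
  - eapply Rle_lt_trans; [apply B2|].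
    assert (delta <= eps * (n * n) / 32) by apply Rmin_r.
    apply Rle_lt_trans with (16 * (eps * (n * n) / 32) / (n * n)).
    { unfold Rdiv. apply Rmult_le_compat_r; [left; apply Rinv_0_lt_compat; nra | lra]. }
    replace (16 * (eps * (n * n) / 32) / (n * n)) with (eps / 2) by (field; lra). lra.
Qed.

Lemma eigenvalue_angular_derivative : has_angular_derivative (char_fun HU psi) z0.
Proof.
  split.
  - exists (RtoC 1). split; [|apply Cmod_1].
    intros M HM eps ep. destruct (char_fun_nt_estimates M HM eps ep) as [d [dp Hd]].
    exists d. split; auto. intros z Hz Hst Hdl. apply Hd; auto.
  - exists (fun z => Cdiv (res_form_deriv HU psi z) (Cmult (res_form HU psi z) (res_form HU psi z))).
    split; [intros z Hz; apply char_fun_derivative; auto|].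
    exists (Cdiv (Cconj z0) (RtoC (hnorm2 q))).
    intros M HM eps ep. destruct (char_fun_nt_estimates M HM eps ep) as [d [dp Hd]].
    exists d. split; auto. intros z Hz Hst Hdl. apply Hd; auto.
Qed.

End EigenvalueToAngularDerivative.

(* If [z0] is not an eigenvalue then [psi] lies in the closure of [ran (U - z0)], so
   [(1 - t) |(U - t z0)^-1 U psi|] tends to 0; but a bounded derivative forces
   [|1 / res_form (t z0)| = |char_fun (t z0) - 1| <= 2 C0 (1 - t)]. *)
Lemma angular_derivative_eigenvalue {U : H -> H} (HU : unitary HS U) psi z0 :
  hnorm2 psi = 1 -> Cmod z0 = 1 ->
  nt_limit (char_fun HU psi) z0 (RtoC 1) ->
  (exists b' : C -> C, (forall z, Cmod z < 1 -> disc_derivative (char_fun HU psi) z (b' z)) /\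
     exists L', nt_limit b' z0 L') ->
  exists h, h <> 0v /\ U h = z0 *v h.
Proof.
  intros psi_unit z0_unit HW [b' [Hb' [L' HL']]].
  apply NNPP. intro Hn.
  assert (Cpsi : hclosure (ran_shift U z0) psi).
  { destruct (ran_shift_eigen_decomposition HU z0 z0_unit psi) as [p [q [Cp [Hq ->]]]].
    replace q with 0v; [rewrite hadd_zero; auto|].
    apply NNPP. intro qnz. apply Hn. exists q. auto. }
  destruct (nt_limit_radial_bound b' z0 L' z0_unit HL') as [r1 [Hr1 Bd]].
  set (C0 := Cmod L' + 1). assert (C0p : 1 <= C0) by (pose proof (Cmod_ge_0 L'); unfold C0; lra).
  assert (Hd : forall c, r1 <= c < 1 ->
    disc_derivative (char_fun HU psi) (Cmult (RtoC c) z0) (b' (Cmult (RtoC c) z0)))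
    by (intros c Hc; apply Hb'; rewrite Cmod_radial_pos; lra).
  pose proof (radial_limit_rate _ b' z0 _ C0 r1 z0_unit Hr1 HW Hd Bd) as Rate.
  destruct (res_ran_shift_closure_small HU z0 z0_unit psi Cpsi (1 / (4 * C0)))
    as [de [dep Hde]]; [apply Rdiv_lt_0_compat; lra|].
  pose proof (Rmax_l r1 (1 - de / 2)). pose proof (Rmax_r r1 (1 - de / 2)).
  set (t := Rmax r1 (1 - de / 2)) in *.
  assert (tc : t < 1) by (apply Rmax_lub_lt; lra).
  set (z := Cmult (RtoC t) z0).
  assert (Hz : Cmod z < 1) by (unfold z; rewrite Cmod_radial_pos; lra).
  specialize (Hde z Hz ltac:(unfold z; rewrite Cmod_radial_dist; lra)).
  unfold z in Hde. rewrite Cmod_radial_pos in Hde by lra. fold z in Hde.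
  specialize (Rate t ltac:(lra)). fold z in Rate.
  pose proof (char_fun_dist_1_ge HU psi psi_unit z Hz) as Low.
  pose proof (hnorm_ge_0 (res HU z psi)).
  assert (1 <= 2 * C0 * ((1 - t) * nm (res HU z psi))).
  { eapply Rle_trans; [apply Low|]. rewrite Rmult_comm, <- Rmult_assoc.
    apply Rmult_le_compat_r; auto. }
  assert (Hsmall : 2 * C0 * ((1 - t) * nm (res HU z psi)) < 2 * C0 * (1 / (4 * C0)))
    by (apply Rmult_lt_compat_l; lra).
  replace (2 * C0 * (1 / (4 * C0))) with (1/2) in Hsmall by (field; lra).
  lra.
Qed.

(** * Unitary extensions of [V] *)

Lemma dim_one_coord (M : H -> Prop) e v : dim_one HS M -> M e -> hnorm2 e = 1 -> M v ->
  v = [< v, e >] *v e.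
Proof.
  intros [e1 [e1nz He1]] Me Ne Mv.
  destruct (proj1 (He1 e) Me) as [c0 E0]. destruct (proj1 (He1 v) Mv) as [c Ev].
  assert (c0nz : c0 <> RtoC 0).
  { intro Ec. subst c0. rewrite E0, hscal_0_l, hnorm2_0 in Ne. lra. }
  assert (Ev' : v = Cdiv c c0 *v e) by (rewrite E0, Ev, hscal_assoc; f_equal; field; auto).
  rewrite Ev' at 2. rewrite hinner_scal_l, hinner_self, Ne, Cmult_1_r. auto.
Qed.

Lemma line_closed h (u : nat -> H) l : h <> 0v -> (forall n, exists c, u n = c *v h) ->
  (forall eps, 0 < eps -> exists N, forall n, (N <= n)%nat -> nm (u n -v l) < eps) ->
  exists c, l = c *v h.
Proof.
  intros hnz Hu Hl. pose proof (hnorm2_pos h hnz) as hp.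
  set (be := Cdiv [< l, h >] (RtoC (hnorm2 h))).
  exists be. apply hsub_eq0, hnorm_eq_0.
  set (m := l -v be *v h).
  assert (mh : [< m, h >] = RtoC 0).
  { unfold m, be. rewrite hinner_sub_l, hinner_scal_l, hinner_self. field.
    intro E; injection E; lra. }
  pose proof (hnorm_ge_0 m).
  destruct (Req_dec (nm m) 0) as [|Hne]; auto. exfalso.
  destruct (Hl (nm m) ltac:(lra)) as [N HN]. specialize (HN N (le_n _)).
  destruct (Hu N) as [cN EN].
  (* [u N - l] is [-m] plus a multiple of [h], orthogonal to [m] *)
  assert (Hm : hnorm2 m <= hnorm2 (u N -v l)).
  { replace (u N -v l) with ((Cminus cN be) *v h +v -v m) by (rewrite EN; unfold m; hvec).
    rewrite hnorm2_add_orth, hnorm2_opp. pose proof (hnorm2_ge_0 (Cminus cN be *v h)). lra.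
    rewrite hinner_opp_r, hinner_scal_l, hinner_conj, mh. simpl. ring. }
  pose proof (hnorm_le_hnorm2 _ _ Hm). lra.
Qed.

Lemma dense_no_fixed_vector (dom : H -> Prop) (V : H -> H) : dense HS (fun y => exists x, dom x /\ y = V x -v x) ->
  forall U, unitary_extension HS dom V U -> ~ eigenvalue HS U (RtoC 1).
Proof.
  intros Hd U [HU Hext] [h [hnz Hh]].
  rewrite hscal_one in Hh.
  assert (Orth : forall x, dom x -> [< V x -v x, h >] = RtoC 0).
  { intros x Dx. rewrite hinner_sub_l, <- Hext by auto.
    rewrite <- Hh at 1. rewrite (unitary_hinner HU). ring. }
  pose proof (hnorm_pos h hnz) as hp.
  destruct (Hd h (nm h) hp) as [y [[x [Dx ->]] Hy]].
  (* [h - (V x - x)] has a component [h] orthogonal to the rest, so it is not shorter than [h] *)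
  assert (Hh' : hnorm2 h <= hnorm2 (h -v (V x -v x))).
  { unfold hsub at 1. rewrite hnorm2_add_orth, hnorm2_opp.
    - pose proof (hnorm2_ge_0 (V x -v x)). lra.
    - rewrite hinner_opp_r, hinner_conj, Orth by auto. simpl. ring. }
  pose proof (hnorm_le_hnorm2 _ _ Hh'). lra.
Qed.

Section Extensions.
Variables (dom : H -> Prop) (V : H -> H) (U0 : H -> H) (psi : H).
Hypotheses (V_iso : isometric_lt HS dom V) (HU0 : unitary HS U0)
           (U0_ext : forall x, dom x -> U0 x = V x)
           (psi_unit : hnorm2 psi = 1) (psi_orth : orth HS dom psi)
           (dom_def : dim_one HS (orth HS dom)) (ran_def : dim_one HS (orth HS (ran dom V))).

Let phi := U0 psi.

Lemma phi_orth_ran : orth HS (ran dom V) phi.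
Proof.
  intros y [x [Dx ->]]. rewrite <- U0_ext by auto. unfold phi.
  rewrite (unitary_hinner HU0). apply psi_orth. auto.
Qed.

Lemma dom_of_orth_psi y : [< y, psi >] = RtoC 0 -> dom y.
Proof.
  intro Hy. destruct (orth_projection dom y (proj1 V_iso)) as [p [Dp Op]].
  pose proof (dim_one_coord _ psi _ dom_def psi_orth psi_unit Op) as E.
  rewrite hinner_sub_l, Hy, (psi_orth p Dp) in E.
  replace (Cminus (RtoC 0) (RtoC 0)) with (RtoC 0) in E by ring.
  rewrite hscal_0_l in E. apply hsub_eq0 in E. subst; auto.
Qed.

(* The unitary extensions of [V] are exactly [ext_alpha al], [|al| = 1]:
   they send [psi] to [al phi]. *)
Definition ext_alpha (al : C) (x : H) : H := U0 x +v Cmult (Cminus al (RtoC 1)) [< x, psi >] *v phi.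

Lemma ext_alpha_alt al x : ext_alpha al x = U0 (x +v Cmult (Cminus al (RtoC 1)) [< x, psi >] *v psi).
Proof. unfold ext_alpha, phi. rewrite (unitary_add HU0), (unitary_scal HU0). auto. Qed.

Lemma ext_alpha_isometry al x : Cmod al = 1 -> nm (ext_alpha al x) = nm x.
Proof.
  intro Ha. rewrite ext_alpha_alt, (unitary_hnorm HU0). unfold hnorm. fold (hnorm2 x).
  fold (hnorm2 (x +v Cmult (Cminus al (RtoC 1)) [< x, psi >] *v psi)). f_equal.
  rewrite hnorm2_add, hnorm2_scal, psi_unit, hinner_scal_r.
  pose proof (Cmod2_alt al) as Ea. rewrite Ha in Ea.
  rewrite Cmod2_alt. destruct al as [a1 a2], ([< x, psi >]) as [c1 c2]. simpl in *.
  transitivity (hnorm2 x + (c1*c1+c2*c2)*((a1*a1+a2*a2) - 1)); [ring|].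
  replace (a1*a1+a2*a2) with 1 by nra. ring.
Qed.

Lemma ext_alpha_surj al y : Cmod al = 1 -> exists x, ext_alpha al x = y.
Proof.
  intro Ha. set (v := uinv HU0 y). set (c := [< v, psi >]).
  exists (v +v Cmult (Cminus (Cconj al) (RtoC 1)) c *v psi).
  rewrite ext_alpha_alt, hinner_add_l, hinner_scal_l, hinner_self, psi_unit. fold c.
  rewrite <- (uinvK HU0 y). fold v. f_equal.
  pose proof (Cmult_conj_unit_r al Ha) as Eal.
  apply hinner_ext; intro w; unfold hsub; repeat rewrite ?hinner_add_l, ?hinner_scal_l.
  transitivity (Cplus [< v, w >] (Cmult (Cmult c (Cminus (Cmult al (Cconj al)) (RtoC 1))) [< psi, w >]));
    [ring|]. rewrite Eal. ring.
Qed.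

Lemma ext_alpha_unitary_extension al : Cmod al = 1 -> unitary_extension HS dom V (ext_alpha al).
Proof.
  intro Ha. split; [split; [|split; [|split]]|].
  - intros x y. unfold ext_alpha. rewrite (unitary_add HU0), hinner_add_l. hvec.
  - intros a x. unfold ext_alpha. rewrite (unitary_scal HU0), hinner_scal_l. hvec.
  - intro x. apply ext_alpha_isometry, Ha.
  - intro y. apply ext_alpha_surj, Ha.
  - intros x Dx. unfold ext_alpha. rewrite (psi_orth x Dx), Cmult_0_r, hscal_0_l, hadd_zero. auto.
Qed.

Lemma unitary_extension_ext_alpha U' : unitary_extension HS dom V U' ->
  exists al, Cmod al = 1 /\ forall x, U' x = ext_alpha al x.
Proof.
  intros [HU' Hext].
  assert (Orth : orth HS (ran dom V) (U' psi)).
  { intros y [x [Dx ->]]. rewrite <- Hext by auto. rewrite (unitary_hinner HU'). apply psi_orth; auto. }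
  assert (phi_unit : hnorm2 phi = 1) by (unfold phi; rewrite (unitary_hnorm2 HU0); auto).
  set (al := [< U' psi, phi >]).
  assert (Eal : U' psi = al *v phi)
    by (apply (dim_one_coord (orth HS (ran dom V))); auto; apply phi_orth_ran).
  exists al. split.
  { pose proof (unitary_hnorm2 HU' psi) as N. rewrite Eal, hnorm2_scal, phi_unit, psi_unit in N.
    pose proof (Cmod_ge_0 al). nra. }
  intro x. set (c := [< x, psi >]). set (d := x -v c *v psi).
  assert (Dd : dom d).
  { apply dom_of_orth_psi. unfold d. rewrite hinner_sub_l, hinner_scal_l, hinner_self, psi_unit.
    unfold c. ring. }
  assert (Ex : x = d +v c *v psi) by (unfold d; hvec).
  unfold ext_alpha. fold c. rewrite Ex at 1 2.
  rewrite (unitary_add HU'), (unitary_scal HU'), (unitary_add HU0), (unitary_scal HU0).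
  rewrite Hext, U0_ext, Eal by auto. fold phi. hvec.
Qed.

Lemma char_fun_ext_alpha U' (HU' : unitary HS U') al : Cmod al = 1 ->
  (forall x, U' x = ext_alpha al x) ->
  forall z, Cmod z < 1 -> char_fun HU' psi z = Cmult (Cconj al) (char_fun HU0 psi z).
Proof.
  intros Ha HUa z Hz.
  set (k := res HU0 z psi). set (A := res_form HU0 psi z).
  assert (EA : A = [< k, psi >]) by auto.
  assert (Anz : A <> RtoC 0) by (apply res_form_neq_0; auto).
  pose proof (one_plus_rotation_neq_0 al A Ha (res_form_Re_gt HU0 psi psi_unit z Hz)) as dnz.
  set (den := Cplus (RtoC 1) (Cmult (Cminus al (RtoC 1)) A)) in *.
  assert (anz : al <> RtoC 0) by (apply Cmod_neq_0; lra).
  assert (F : U0 k = phi +v z *v k).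
  { pose proof (res_unitary HU0 z psi Hz) as F. fold k in F. unfold phi. rewrite <- F. hvec. }
  assert (Ek : Cdiv al den *v k = res HU' z psi).
  { apply res_of_unitary; auto. rewrite !HUa. unfold ext_alpha.
    rewrite (unitary_scal HU0), F, hinner_scal_l, <- EA, hinner_self, psi_unit. fold phi.
    apply hinner_ext; intro w; unfold hsub;
      repeat rewrite ?hinner_add_l, ?hinner_scal_l, ?hinner_opp_l.
    unfold den. field. auto. }
  unfold char_fun, res_form at 1. rewrite <- Ek, hinner_scal_l, <- EA. fold A.
  rewrite Cconj_unit by auto. unfold den. field. repeat split; auto.
Qed.

(* An eigenvector orthogonal to [psi] would span a reducing subspace inside [dom]. *)
Lemma eigenvector_not_orth_psi U' h z0 : simple_isometry HS dom V ->
  unitary_extension HS dom V U' -> Cmod z0 = 1 ->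
  h <> 0v -> U' h = z0 *v h -> [< h, psi >] <> RtoC 0.
Proof.
  intros Hsimp [HU' Hext] Hz0 hnz Hh Hhp.
  apply Hsimp.
  set (L := fun y => exists c, y = c *v h).
  assert (LD : forall x, L x -> dom x).
  { intros x [c ->]. apply dom_of_orth_psi. rewrite hinner_scal_l, Hhp. ring. }
  exists L. split; [|split; [|split; [|split]]].
  - split; [|split; [|split]].
    + exists (RtoC 0). rewrite hscal_0_l. auto.
    + intros x y [c1 ->] [c2 ->]. exists (Cplus c1 c2). rewrite hscal_distr_r. auto.
    + intros a x [c ->]. exists (Cmult a c). rewrite hscal_assoc. auto.
    + intros u l Hu Hl. apply line_closed with u; auto.
  - exists h. split; auto. exists (RtoC 1). rewrite hscal_one. auto.
  - auto.
  - intros x Lx. pose proof (LD x Lx). destruct Lx as [c ->]. rewrite <- Hext by auto.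
    rewrite (unitary_scal HU'), Hh, hscal_assoc. exists (Cmult c z0). auto.
  - intros y [c ->]. exists (Cmult c (Cconj z0) *v h). split; [exists (Cmult c (Cconj z0)); auto|].
    rewrite <- Hext by (apply LD; exists (Cmult c (Cconj z0)); auto).
    rewrite (unitary_scal HU'), Hh, hscal_assoc.
    f_equal. rewrite <- Cmult_assoc, Cmult_conj_unit_l by auto. ring.
Qed.

Variable w : C -> C.
Hypothesis w_def : forall z, Cmod z < 1 -> w z = char_fun HU0 psi z.

(* If [w] has limit [L] at [z0], the extension [ext_alpha L] has characteristic
   function [conj L w], whose limit is 1. *)
Lemma angular_derivative_eigenvalue_ext z0 : Cmod z0 = 1 -> has_angular_derivative w z0 ->
  exists U, unitary_extension HS dom V U /\ eigenvalue HS U z0.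
Proof.
  intros Hz0 [[L [HL HLm]] [b' [Hb' [L' HL']]]].
  pose proof (ext_alpha_unitary_extension L HLm) as Hext.
  set (U' := ext_alpha L) in *.
  pose proof (proj1 Hext) as HU'.
  assert (Rel : forall z, Cmod z < 1 -> Cmult (Cconj L) (w z) = char_fun HU' psi z).
  { intros z Hz. rewrite (char_fun_ext_alpha U' HU' L HLm
                            (fun x => eq_refl) z Hz), w_def by auto. auto. }
  assert (HcL : Cmod (Cconj L) = 1) by (rewrite Cmod_conj; auto).
  exists U'. split; auto.
  apply (angular_derivative_eigenvalue HU' psi z0 psi_unit Hz0).
  - rewrite <- (Cmult_conj_unit_l L HLm).
    apply (nt_limit_ext (fun z => Cmult (Cconj L) (w z))); auto.
    apply nt_limit_scal; auto.
  - exists (fun z => Cmult (Cconj L) (b' z)). split.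
    + intros z Hz. apply (disc_derivative_ext (fun z => Cmult (Cconj L) (w z))); auto.
      apply disc_derivative_scal; auto.
    + exists (Cmult (Cconj L) L'). apply nt_limit_scal; auto.
Qed.

(* Simplicity makes the eigenvector [h] non-orthogonal to [psi], so [psi] has a
   nonzero component along the eigenspace of [z0]. *)
Lemma eigenvalue_ext_angular_derivative U z0 : simple_isometry HS dom V -> Cmod z0 = 1 ->
  unitary_extension HS dom V U -> eigenvalue HS U z0 -> has_angular_derivative w z0.
Proof.
  intros Hsimp Hz0 Hext [h [hnz Hh]].
  destruct (unitary_extension_ext_alpha U Hext) as [al [Ha HUa]].
  pose proof (proj1 Hext) as HU.
  pose proof (eigenvector_not_orth_psi U h z0 Hsimp Hext Hz0 hnz Hh) as hpsi.
  destruct (ran_shift_eigen_decomposition HU z0 Hz0 psi) as [p [q [Cp [Hq Hdec]]]].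
  assert (qnz : q <> 0v).
  { intro q0. rewrite q0, hadd_zero in Hdec. subst p.
    apply hpsi. rewrite hinner_conj, (hclosure_orth (ran_shift U z0) h psi); auto.
    - apply C_eq; simpl; ring.
    - apply (eigen_orth_ran_shift HU z0 Hz0 h Hh). }
  apply (angular_derivative_ext (fun z => Cmult al (char_fun HU psi z))).
  - intros z Hz. rewrite (char_fun_ext_alpha U HU al Ha HUa z Hz).
    rewrite Cmult_assoc, Cmult_conj_unit_r, w_def by auto. ring.
  - apply angular_derivative_scal; auto.
    apply (eigenvalue_angular_derivative HU psi z0 p q); auto.
Qed.

Lemma fixed_vector_of_orth q : (forall x, dom x -> [< V x -v x, q >] = RtoC 0) ->
  exists al, Cmod al = 1 /\ ext_alpha al q = q.
Proof.
  intro qT.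
  set (v := uinv HU0 q -v q).
  assert (Ov : orth HS dom v).
  { intros x Dx. unfold v. rewrite hinner_sub_r, <- (unitary_adjoint HU0), U0_ext by auto.
    rewrite <- hinner_sub_l. apply qT; auto. }
  pose proof (dim_one_coord _ psi v dom_def psi_orth psi_unit Ov) as Ev.
  set (c := [< v, psi >]) in *. set (a := [< q, psi >]).
  assert (E1 : uinv HU0 q = q +v c *v psi) by (rewrite <- Ev; unfold v; hvec).
  assert (EU : U0 q = q -v c *v U0 psi).
  { rewrite <- (uinvK HU0 q) at 2. rewrite E1, (unitary_add HU0), (unitary_scal HU0).
    hvec. }
  (* [U0^-1] is isometric, hence [|c|^2 + 2 Re(conj c a) = 0] *)
  assert (Nrm : Cmod c ^ 2 + 2 * Re (Cmult (Cconj c) a) = 0).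
  { pose proof (uinv_hnorm HU0 q) as N. rewrite E1 in N.
    apply sqrt_inj in N; try apply hnorm2_ge_0.
    fold (hnorm2 (q +v c *v psi)) (hnorm2 q) in N.
    rewrite hnorm2_add, hnorm2_scal, psi_unit, hinner_scal_r in N. fold a in N. lra. }
  destruct (unimodular_shift_solution a c Nrm) as [al [Ha Hc]].
  exists al. split; auto. unfold ext_alpha.
  change (Cmult (Cminus al (RtoC 1)) [< q, psi >]) with (Cmult (Cminus al (RtoC 1)) a).
  rewrite Hc, EU. unfold phi. hvec.
Qed.

Lemma no_fixed_vector_dense :
  (forall U, unitary_extension HS dom V U -> ~ eigenvalue HS U (RtoC 1)) ->
  dense HS (fun y => exists x, dom x /\ y = V x -v x).
Proof.
  destruct V_iso as [[D0 [Dadd [Dscal _]]] [Vadd [Vscal _]]].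
  intros Hall h0 eps ep.
  set (T := fun y => exists x, dom x /\ y = V x -v x).
  assert (CT : closed_subspace HS (hclosure T)).
  { apply hclosure_subspace.
    - exists 0v. split; auto. rewrite <- U0_ext, (unitary_0 HU0), hsub_diag by auto. auto.
    - intros a b [x [Dx ->]] [y [Dy ->]]. exists (x +v y). split; auto. rewrite Vadd by auto. hvec.
    - intros c a [x [Dx ->]]. exists (c *v x). split; auto. rewrite Vscal by auto. hvec. }
  destruct (orth_projection _ h0 CT) as [p [Cp Op]].
  assert (q0 : h0 -v p = 0v).
  { apply NNPP. intro qnz.
    destruct (fixed_vector_of_orth (h0 -v p)) as [al [Ha Hfix]].
    { intros x Dx. apply Op, hclosure_incl. exists x. auto. }
    apply (Hall _ (ext_alpha_unitary_extension al Ha)).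
    exists (h0 -v p). split; auto. rewrite hscal_one. auto. }
  apply hsub_eq0 in q0. subst h0. apply Cp, ep.
Qed.

End Extensions.

Lemma char_fun_resolvent_quotient {U : H -> H} (HU : unitary HS U) psi z :
  hnorm2 psi = 1 -> Cmod z < 1 ->
  char_fun HU psi z = Cdiv (Cmult z [< uinv HU (res HU z psi), psi >]) [< res HU z psi, psi >].
Proof.
  intros psi_unit Hz.
  pose proof (res_form_neq_0 HU psi psi_unit z Hz) as Anz. unfold res_form in Anz.
  assert (E : Cmult z [< uinv HU (res HU z psi), psi >] = Cminus (res_form HU psi z) (RtoC 1)).
  { pose proof (f_equal (fun v => [< v, psi >]) (res_spec HU z psi Hz)) as G. simpl in G.
    rewrite hinner_sub_l, hinner_scal_l, hinner_self, psi_unit in G.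
    unfold res_form. rewrite <- G. ring. }
  rewrite E. unfold char_fun, res_form. field. auto.
Qed.

(* The defining formula of [w] does not depend on the normalization of [psi]. *)
Lemma characteristic_function_char_fun dom V w : characteristic_function HS dom V w ->
  exists U0 (HU0 : unitary HS U0) psi, (forall x, dom x -> U0 x = V x) /\
    hnorm2 psi = 1 /\ orth HS dom psi /\ forall z, Cmod z < 1 -> w z = char_fun HU0 psi z.
Proof.
  intros [U0 [psi0 [[HU0 Hext0] [psi0nz [Hpo0 Hform]]]]].
  pose proof (hnorm_pos psi0 psi0nz) as np. set (n := nm psi0) in *.
  set (psi := RtoC (/ n) *v psi0).
  assert (Epsi0 : psi0 = RtoC n *v psi).
  { unfold psi. rewrite hscal_assoc, <- RtoC_mult, Rinv_r, hscal_one by lra. auto. }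
  exists U0, HU0, psi. split; [|split; [|split]]; auto.
  - unfold psi. rewrite hnorm2_scal, <- (hnorm_sqr psi0), Cmod_RtoC.
    + fold n. field. lra.
    + left. apply Rinv_0_lt_compat. auto.
  - intros x Dx. unfold psi. rewrite hinner_scal_r, Hpo0 by auto. ring.
  - assert (psi_unit : hnorm2 psi = 1).
    { unfold psi. rewrite hnorm2_scal, <- (hnorm_sqr psi0), Cmod_RtoC by (left; apply Rinv_0_lt_compat; auto).
      fold n. field. lra. }
    intros z Hz.
    set (k := res HU0 z psi).
    assert (nC : RtoC n <> RtoC 0) by (intro E; injection E; lra).
    assert (Cn : Cconj (RtoC n) = RtoC n) by (apply C_eq; simpl; ring).
    rewrite (Hform z Hz (uinv HU0 (RtoC n *v k)) (RtoC n *v k)).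
    + rewrite char_fun_resolvent_quotient, Epsi0, !hinner_scal_r, Cn, (uinv_scal HU0),
        !hinner_scal_l by auto.
      fold k. field. split; auto. apply (res_form_neq_0 HU0 psi psi_unit z Hz).
    + rewrite (uinvK HU0), (uinv_scal HU0), Epsi0, <- (res_spec HU0 z psi Hz). fold k. hvec.
    + rewrite Epsi0, !(unitary_scal HU0), <- (res_unitary HU0 z psi Hz). fold k. hvec.
Qed.

End Hilbert.

Theorem theorem6 (H : Type) (HS : HilbertSpace H) (dom : H -> Prop) (V : H -> H)
  (w : CC -> CC) :
  isometric_lt HS dom V ->
  simple_isometry HS dom V ->
  deficiency_1_1 HS dom V ->
  characteristic_function HS dom V w ->
  (forall z : CC, Cmod z = 1%R ->
     ((forall U, unitary_extension HS dom V U -> ~ eigenvalue HS U z)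
      <-> ~ has_angular_derivative w z)) /\
  (dense HS (fun y => exists x, dom x /\ y = hsub HS (V x) x)
     <-> ~ has_angular_derivative w (RtoC 1%R)).
Proof.
  intros Hiso Hsimp [Hdd Hdr] Hchar.
  destruct (characteristic_function_char_fun HS dom V w Hchar)
    as [U0 [HU0 [psi [Hext0 [Hpsi [Hpo Hw]]]]]].
  assert (Eig : forall z, Cmod z = 1 ->
    (forall U, unitary_extension HS dom V U -> ~ eigenvalue HS U z) <-> ~ has_angular_derivative w z).
  { intros z Hz. split.
    - intros Hno Hang.
      destruct (angular_derivative_eigenvalue_ext HS dom V U0 psi HU0 Hext0 Hpsi Hpo w Hw z Hz Hang)
        as [U [HU He]].
      exact (Hno U HU He).
    - intros Hnang U HU He. apply Hnang.
      exact (eigenvalue_ext_angular_derivative HS dom V U0 psi Hiso HU0 Hext0 Hpsi Hpo Hdd Hdr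
               w Hw U z Hsimp Hz HU He). }
  split; auto.
  rewrite <- (Eig (RtoC 1) Cmod_1). split.
  - apply dense_no_fixed_vector.
  - exact (no_fixed_vector_dense HS dom V U0 psi Hiso HU0 Hext0 Hpsi Hpo Hdd).
Qed.
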